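(* Let $\mathcal R$ be a strong CCTRS over $\mathcal F$ and $\upsilon$ a usable replacement map for $\mathcal R$. Then $\mathrm{crc}_{\mathcal R}(n)\le\mathrm{rc}_{\Xi(\mathcal R),\mu\upsilon}(n)$ for all $n\ge0$.
   Context: A CCTRS over $\mathcal F$ is a set $\mathcal R$ of conditional rules each of the form $f(\ell_1,\dots,\ell_n)\to r\Leftarrow a_1\approx b_1,\dots,a_k\approx b_k$ (defined symbols $\mathcal F_{\mathcal D}$ are roots of left-hand sides, others constructors; constructor terms contain only constructors and variables; a basic term is $f(t_1,\dots,t_n)$ with $f$ defined and all $t_i$ constructor terms) where $\ell_1,\dots,\ell_n,b_1,\dots,b_k$ are constructor terms, the terms $f(\ell_1,\dots,\ell_n),b_1,\dots,b_k$ pairwise share no variables, $\mathrm{Var}(r)\subseteq\mathrm{Var}(\ell_1,\dots,\ell_n,b_1,\dots,b_k)$, and $\mathrm{Var}(a_i)\subseteq\mathrm{Var}(\ell_1,\dots,\ell_n,b_1,\dots,b_{i-1})$; write $b_0=f(\ell_1,\dots,\ell_n)$ and $a_{k+1}=r$. $\mathcal R{\restriction}f$ is the set of rules with left-hand root $f$. A strong CCTRS is a CCTRS with each $\mathcal R{\restriction}f$ finite and each $f(\ell_1,\dots,\ell_n)$ and $b_j$ linear. Let $m_f=|\mathcal R{\restriction}f|$ (0 for constructors), with fixed enumeration $\rho^f_1,\dots,\rho^f_{m_f}$. Labeled reduction: $\mathcal G$ consists of the constructors and symbols $f_R$ ($R\subseteq\mathcal R{\restriction}f$, same arity as $f$);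 $\mathrm{label}$ replaces each defined $f$ by $f_{\mathcal R\restriction f}$; $\mathrm{erase}$ removes labels; labeled normal forms are terms over constructors, symbols $f_\emptyset$ and variables. $s\rightharpoonup t$ is defined inductively: either (i, $\bot$-step) there are $p$ and a rule $\rho\colon\ell\to r\Leftarrow c$ with $s|_p=f_R(s_1,\dots,s_n)$, $\rho\in R$, $t=s[f_{R\setminus\{\rho\}}(s_1,\dots,s_n)]_p$, and linear labeled normal forms $u_1,\dots,u_n$ on fresh variables and $\sigma$ with $s|_p=f_R(u_1,\dots,u_n)\sigma$ and $f(\mathrm{erase}(u_1),\dots,\mathrm{erase}(u_n))$ not unifiable with $\ell$; or (ii) there are $p$, $\rho\colon f(\ell_1,\dots,\ell_n)\to r\Leftarrow a_1\approx b_1,\dots,a_k\approx b_k$, $\sigma$, $0\le j\le k$ with $s|_p=f_R(\ell_1\sigma,\dots,\ell_n\sigma)$, $\rho\in R$, $\mathrm{label}(a_i)\sigma\rightharpoonup^*b_i\sigma$ for $1\le i\le j$, and either (successful) $j=k$, $t=s[\mathrm{label}(r)\sigma]_p$, or (failed) $j<k$, $\mathrm{label}(a_{j+1})\sigma\rightharpoonup^*u\tau$ for a linear labeled normal form $u$ with $\mathrm{erase}(u)$ not unifiable with $b_{j+1}$, and $t=s[f_{R\setminus\{\rho\}}(\ell_1\sigma,\dots,\ell_n\sigma)]_p$. A complexity-conscious reduction is a labeled reduction with chosen witnessing condition reductions; its cost is the sum of step costs: a $\bot$-step costs $0$, a successful step $1$ plus the costs of its $k$ condition reductions, a failed step the sum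 of the costs of its $j$ condition reductions and of $\mathrm{label}(a_{j+1})\sigma\rightharpoonup^*u\tau$. $s\rightharpoonup_\rhd t$ if there are $p$, $\rho$ as in (ii), $\sigma$, $0\le j<k$ with $s|_p=f_R(\ell_1\sigma,\dots,\ell_n\sigma)$, $\rho\in R$, $\mathrm{label}(a_i)\sigma\rightharpoonup^*b_i\sigma$ for $i\le j$, $t=\mathrm{label}(a_{j+1})\sigma$; $s\rightharpoonup^\infty$ means an infinite sequence of $\rightharpoonup\cup\rightharpoonup_\rhd$ steps from $s$. For a labeled term $s$, $\mathrm{dh}(s)$ is the maximum of the costs of all complexity-conscious reductions starting from $s$, together with $\infty$ if $s\rightharpoonup^\infty$. $\mathrm{crc}_{\mathcal R}(n)=\max\{\mathrm{dh}(\mathrm{label}(t))\mid t\text{ ground basic},\ |t|\le n\}$, with $|t|$ the number of symbols in $t$. The transformed system: signature $\mathcal H$ with constants $\bot,\top$; every $f\in\mathcal F$ of arity $n$ as a symbol of arity $n+m_f$ with $\mu(f)=\{1,\dots,n\}$; for every defined $f$ of arity $n$, every $\rho^f_i$ with $k>0$ conditions and $1\le j\le k$ a symbol $f_i^j$ of arity $n+m_f+j-1$ with $\mu(f_i^j)=\{n+i+j-1\}$; $\mu(\bot)=\mu(\top)=\emptyset$. For a replacement map $\nu$, a position is $\nu$-active in $t$ if it is $\epsilon$ or $iq$ with $i\in\nu(\mathrm{root}(t))$ and $q$ $\nu$-active in $t|_i$; $\mathrm{Pos}_\nu(t)$ is the set of $\nu$-active positions, and $\to_{\Xi(\mathcal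 R),\nu}$ rewrites only at $\nu$-active positions. $\xi_\star$ ($\star\in\{\bot,\top\}$): identity on variables, homomorphic on constructors, $f(t_1..t_n)\mapsto f(\xi_\star(t_1),\dots,\xi_\star(t_n),\star,\dots,\star)$ ($m_f$ copies) for defined $f$. For a linear constructor term $t$: $\mathrm{AP}(x)=\emptyset$, and $\mathrm{AP}(f(t_1,\dots,t_n))$ consists of $g(x_1,\dots,x_m)$ for every constructor $g\neq f$ of arity $m$, $g(x_1,\dots,x_m,\bot,\dots,\bot)$ for every defined $g$ of arity $m$, and $f(x_1,\dots,x_{i-1},u,x_{i+1},\dots,x_n)$ for $u\in\mathrm{AP}(t_i)$ (fresh distinct $x$'s). Notation: $\langle t_1,\dots,t_n\rangle[u_1,\dots,u_j]_i$ is $t_1,\dots,t_{i-1},u_1,\dots,u_j,t_{i+1},\dots,t_n$. For the $i$-th rule $\rho_i\colon f(\vec\ell)\to r\Leftarrow a_1\approx b_1,\dots,a_k\approx b_k$ of $\mathcal R{\restriction}f$ and fresh distinct $x_1,\dots,x_{m_f},y_1,\dots,y_n$, $\Xi(\mathcal R)$ contains: $(1)$ if $k=0$: $f(\vec\ell,\langle\vec x\rangle[\top]_i)\to\xi_\top(r)$; if $k>0$: $(2)$ $f(\vec\ell,\langle\vec x\rangle[\top]_i)\to f_i^1(\vec\ell,\langle\vec x\rangle[\xi_\top(a_1)]_i)$, $(3)$ $f_i^k(\vec\ell,\langle\vec x\rangle[b_1,\dots,b_k]_i)\to\xi_\top(r)$, $(4)$ for $1\le j<k$: $f_i^j(\vec\ell,\langle\vec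 x\rangle[b_1,\dots,b_j]_i)\to f_i^{j+1}(\vec\ell,\langle\vec x\rangle[b_1,\dots,b_j,\xi_\top(a_{j+1})]_i)$, $(5)$ for $1\le j\le k$ and $v\in\mathrm{AP}(b_j)$: $f_i^j(\vec\ell,\langle\vec x\rangle[b_1,\dots,b_{j-1},v]_i)\to f(\vec\ell,\langle\vec x\rangle[\bot]_i)$; and for any $k$: $(6)$ for $1\le j\le n$, $v\in\mathrm{AP}(\ell_j)$: $f(\langle\vec y\rangle[v]_j,\langle\vec x\rangle[\top]_i)\to f(\langle\vec y\rangle[v]_j,\langle\vec x\rangle[\bot]_i)$. The cost of a $\Xi(\mathcal R)$-reduction is the number of steps with rules of type (1) or (3). For $s\in\mathcal T(\mathcal H)$, $\mathrm{dh}_\nu(s)$ is the maximum cost of a $\to_{\Xi(\mathcal R),\nu}$-reduction from $s$ ($\infty$ if $s$ is non-terminating), and $\mathrm{rc}_{\Xi(\mathcal R),\nu}(n)=\max\{\mathrm{dh}_\nu(s)\mid s\in\mathcal T(\mathcal H)\text{ basic},\ |s|\le n\}$, where basic means the root is $f$ or $f_i^j$ ($f$ defined) and all arguments are built from constructors of $\mathcal F$ and $\bot,\top$, and $|s|$ counts the function symbols of $s$ other than $\top$. A replacement map $\upsilon$ on $\mathcal F$ (assigning to each $n$-ary $f$ a subset of $\{1,\dots,n\}$) is usable for $\mathcal R$ if for every rule $b_0\to a_{k+1}\Leftarrow a_1\approx b_1,\dots,a_k\approx b_k$, all $1\le i\le k+1$ and $p\in\mathrm{Pos}(a_i)$: $p\in\mathrm{Pos}_\upsilon(a_i)$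 whenever either the symbol of $a_i$ at $p$ is defined, or $p$ is a variable position of $a_i$ and there are $0\le j<i$ and $q\in\mathrm{Pos}_\upsilon(b_j)$ with $a_i|_p=b_j|_q$. The replacement map $\mu\upsilon$ on $\mathcal H$ is $\mu\upsilon(f)=\upsilon(f)$ for $f\in\mathcal H\cap\mathcal F$ and $\mu\upsilon(g)=\mu(g)$ for $g\in\mathcal H\setminus\mathcal F$. *)

From Stdlib Require Import List Arith Lia ClassicalEpsilon.
Import ListNotations.

Inductive enat : Type := fin : nat -> enat | inf : enat.

Definition ele (x y : enat) : Prop :=
  match x, y with
  | _, inf => True
  | inf, fin _ => False
  | fin a, fin b => a <= b
  end.

Definition is_lub (P : enat -> Prop) (x : enat) : Prop :=
  (forall y, P y -> ele y x) /\ (forall z, (forall y, P y -> ele y z) -> ele x z).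

(* the supremum ("maximum") of a set of extended naturals; sup of the empty set is 0 *)
Definition esup (P : enat -> Prop) : enat := epsilon (inhabits inf) (is_lub P).

Inductive term (S : Type) : Type :=
| Var : nat -> term S
| Fun : S -> list (term S) -> term S.
Arguments Var {S} _.
Arguments Fun {S} _ _.

Fixpoint subst {S : Type} (s : nat -> term S) (t : term S) : term S :=
  match t with
  | Var x => s x
  | Fun g ts => Fun g (map (subst s) ts)
  end.

Fixpoint vars {S : Type} (t : term S) : list nat :=
  match t with
  | Var x => [x]
  | Fun _ ts => flat_map vars ts
  end.

Definition linear {S : Type} (t : term S) : Prop := NoDup (vars t).

Definition disjoint (xs ys : list nat) : Prop := forall x, In x xs -> ~ In x ys.

Fixpoint allsyms {S : Type} (P : S -> nat -> Prop) (t : term S) : Prop :=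
  match t with
  | Var _ => True
  | Fun g ts => P g (length ts) /\ fold_right (fun u acc => allsyms P u /\ acc) True ts
  end.

Fixpoint wsize {S : Type} (w : S -> nat) (t : term S) : nat :=
  match t with
  | Var _ => 0
  | Fun g ts => w g + list_sum (map (wsize w) ts)
  end.

(* positions are lists of 1-based argument indices *)
Fixpoint subterm_at {S : Type} (t : term S) (p : list nat) : option (term S) :=
  match p with
  | [] => Some t
  | i :: q =>
      match t with
      | Var _ => None
      | Fun _ ts =>
          match i with
          | 0 => None
          | S i' => match nth_error ts i' with
                    | Some u => subterm_at u q
                    | None => None
                    end
          end
      end
  end.

Fixpoint active {S : Type} (nu : S -> nat -> Prop) (t : term S) (p : list nat) : Prop :=
  match p with
  | [] => True
  | i :: q =>
      match t with
      | Var _ => False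
      | Fun g ts =>
          nu g i /\
          match i with
          | 0 => False
          | S i' => match nth_error ts i' with
                    | Some u => active nu u q
                    | None => False
                    end
          end
      end
  end.

Definition unifiable {S : Type} (s t : term S) : Prop :=
  exists th : nat -> term S, subst th s = subst th t.

(* <t_1,...,t_n>[u_1,...,u_j]_i   (i is 1-based) *)
Definition repl {A : Type} (ts : list A) (i : nat) (us : list A) : list A :=
  firstn (i - 1) ts ++ us ++ skipn i ts.

(* f(l_1,...,l_n) -> r <= a_1 ~ b_1, ..., a_k ~ b_k *)
Record crule (F : Type) : Type := mkRule {
  lhs_f : F;
  lhs_args : list (term F);
  rhs : term F;
  conds : list (term F * term F)
}.
Arguments lhs_f {F} _.
Arguments lhs_args {F} _.
Arguments rhs {F} _.
Arguments conds {F} _.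

Definition lhs {F : Type} (rho : crule F) : term F := Fun (lhs_f rho) (lhs_args rho).

(* labeled symbols: constructors, and f_L where L is the set of (0-based)
   indices into the fixed enumeration Rs f of R|f *)
Inductive lsym (F : Type) : Type :=
| LC : F -> lsym F
| LD : F -> list nat -> lsym F.
Arguments LC {F} _.
Arguments LD {F} _ _.

Inductive hsym (F : Type) : Type :=
| HBot : hsym F
| HTop : hsym F
| HF : F -> hsym F                    (* f, of arity n + m_f *)
| HAux : F -> nat -> nat -> hsym F.   (* f_i^j, i and j 1-based *)
Arguments HBot {F}.
Arguments HTop {F}.
Arguments HF {F} _.
Arguments HAux {F} _ _ _.

Section CCTRS.
Context {F : Type} (ar : F -> nat).
(* The system: R|f is given by the fixed duplicate-free enumeration Rs f
   (rho^f_1, ..., rho^f_{m_f}); R is the union of all Rs f. *)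
Context (Rs : F -> list (crule F)).

Definition mf (f : F) : nat := length (Rs f).
Definition is_defined (f : F) : Prop := Rs f <> [].
Definition is_constructor (f : F) : Prop := Rs f = [].

Definition wf (t : term F) : Prop := allsyms (fun g n => n = ar g) t.
Definition cterm (t : term F) : Prop := allsyms (fun g _ => is_constructor g) t.

Definition strong_cctrs : Prop :=
  forall f, NoDup (Rs f) /\
  forall rho, In rho (Rs f) ->
    let bs := map snd (conds rho) in
    let bs0 := lhs rho :: bs in
    lhs_f rho = f /\
    wf (lhs rho) /\ wf (rhs rho) /\
    Forall (fun c => wf (fst c) /\ wf (snd c)) (conds rho) /\
    Forall cterm (lhs_args rho) /\ Forall cterm bs /\
    (forall i j u v, i <> j -> nth_error bs0 i = Some u -> nth_error bs0 j = Some v ->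
        disjoint (vars u) (vars v)) /\
    incl (vars (rhs rho)) (vars (lhs rho) ++ flat_map vars bs) /\
    (forall i a b, nth_error (conds rho) i = Some (a, b) ->
        incl (vars a) (vars (lhs rho) ++ flat_map vars (firstn i bs))) /\
    (* strong: linearity *)
    linear (lhs rho) /\ Forall linear bs.

Definition repmap (ups : F -> nat -> Prop) : Prop :=
  forall f i, ups f i -> 1 <= i <= ar f.

(* usable replacement map; a_{i0+1} for i0 < k is fst of the i0-th condition,
   a_{k+1} = r; b_0 = lhs, b_j = snd of the (j-1)-th condition *)
Definition usable (ups : F -> nat -> Prop) : Prop :=
  forall f rho, In rho (Rs f) ->
  let as_ := map fst (conds rho) ++ [rhs rho] in
  let bs0 := lhs rho :: map snd (conds rho) in
  forall i0 ai, nth_error as_ i0 = Some ai ->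
  forall p u, subterm_at ai p = Some u ->
  ((exists g us, u = Fun g us /\ is_defined g) \/
   (exists x, u = Var x /\
      exists j bj q, j <= i0 /\ nth_error bs0 j = Some bj /\
                     active ups bj q /\ subterm_at bj q = Some (Var x))) ->
  active ups ai p.

Fixpoint label (t : term F) : term (lsym F) :=
  match t with
  | Var x => Var x
  | Fun g ts =>
      Fun (match Rs g with
           | [] => LC g
           | _ => LD g (seq 0 (length (Rs g)))
           end) (map label ts)
  end.

Fixpoint erase (t : term (lsym F)) : term F :=
  match t with
  | Var x => Var x
  | Fun (LC c) ts => Fun c (map erase ts)
  | Fun (LD f _) ts => Fun f (map erase ts)
  end.

Definition remove_idx (i : nat) (L : list nat) : list nat :=
  filter (fun j => negb (Nat.eqb i j)) L.

Definition lnf (u : term (lsym F)) : Prop :=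
  allsyms (fun s _ => match s with
                      | LC c => is_constructor c
                      | LD f L => is_defined f /\ L = []
                      end) u.

Definition lsub (s : nat -> term (lsym F)) (t : term F) : term (lsym F) :=
  subst s (label t).

(* lstep s t c : s ⇀ t by a complexity-conscious step of cost c *)
Inductive lstep : term (lsym F) -> term (lsym F) -> nat -> Prop :=
| lstep_ctx g ls s t rs c :
    lstep s t c -> lstep (Fun g (ls ++ s :: rs)) (Fun g (ls ++ t :: rs)) c
| lstep_bot f L i rho us sg :
    In i L -> nth_error (Rs f) i = Some rho ->
    Forall lnf us ->
    NoDup (flat_map vars us) ->
    disjoint (flat_map vars us) (vars (lhs rho)) ->
    ~ unifiable (Fun f (map erase us)) (lhs rho) ->
    lstep (Fun (LD f L) (map (subst sg) us))
          (Fun (LD f (remove_idx i L)) (map (subst sg) us)) 0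
| lstep_succ f L i rho sg cs :
    In i L -> nth_error (Rs f) i = Some rho ->
    length cs = length (conds rho) ->
    (forall m a b c, nth_error (conds rho) m = Some (a, b) -> nth_error cs m = Some c ->
        lsteps (lsub sg a) (lsub sg b) c) ->
    lstep (Fun (LD f L) (map (lsub sg) (lhs_args rho)))
          (lsub sg (rhs rho)) (1 + list_sum cs)
| lstep_fail f L i rho sg cs a b u tau c :
    In i L -> nth_error (Rs f) i = Some rho ->
    length cs < length (conds rho) ->
    (forall m a b c, nth_error (conds rho) m = Some (a, b) -> nth_error cs m = Some c ->
        lsteps (lsub sg a) (lsub sg b) c) ->
    nth_error (conds rho) (length cs) = Some (a, b) ->
    lsteps (lsub sg a) (subst tau u) c ->
    lnf u -> linear u -> disjoint (vars u) (vars b) ->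
    ~ unifiable (erase u) b ->
    lstep (Fun (LD f L) (map (lsub sg) (lhs_args rho)))
          (Fun (LD f (remove_idx i L)) (map (lsub sg) (lhs_args rho)))
          (list_sum cs + c)
with lsteps : term (lsym F) -> term (lsym F) -> nat -> Prop :=
| lsteps_refl s : lsteps s s 0
| lsteps_step s t u c1 c2 : lstep s t c1 -> lsteps t u c2 -> lsteps s u (c1 + c2).

Inductive lcond_root : term (lsym F) -> term (lsym F) -> Prop :=
| lcond_root_intro f L i rho sg cs a b :
    In i L -> nth_error (Rs f) i = Some rho ->
    length cs < length (conds rho) ->
    (forall m a b c, nth_error (conds rho) m = Some (a, b) -> nth_error cs m = Some c ->
        lsteps (lsub sg a) (lsub sg b) c) ->
    nth_error (conds rho) (length cs) = Some (a, b) ->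
    lcond_root (Fun (LD f L) (map (lsub sg) (lhs_args rho))) (lsub sg a).

Inductive lcond : term (lsym F) -> term (lsym F) -> Prop :=
| lcond_here s t : lcond_root s t -> lcond s t
| lcond_below g ts s t : In s ts -> lcond s t -> lcond (Fun g ts) t.

Definition linf (s : term (lsym F)) : Prop :=
  exists sq : nat -> term (lsym F), sq 0 = s /\
    forall i, (exists c, lstep (sq i) (sq (S i)) c) \/ lcond (sq i) (sq (S i)).

Definition dh_lab (s : term (lsym F)) : enat :=
  esup (fun x => (exists t c, lsteps s t c /\ x = fin c) \/ (x = inf /\ linf s)).

Definition ground_basic (t : term F) : Prop :=
  wf t /\ vars t = [] /\
  exists f ts, t = Fun f ts /\ is_defined f /\ Forall cterm ts.

Definition crc (n : nat) : enat :=
  esup (fun x => exists t, ground_basic t /\ wsize (fun _ => 1) t <= n /\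
                           x = dh_lab (label t)).

Definition hbot : term (hsym F) := Fun HBot [].
Definition htop : term (hsym F) := Fun HTop [].

Definition hsym_ok (s : hsym F) (n : nat) : Prop :=
  match s with
  | HBot | HTop => n = 0
  | HF f => n = ar f + mf f
  | HAux f i j => exists rho, 1 <= i /\ nth_error (Rs f) (i - 1) = Some rho /\
                  1 <= j <= length (conds rho) /\ n = ar f + mf f + j - 1
  end.

Definition mu (s : hsym F) (p : nat) : Prop :=
  match s with
  | HBot | HTop => False
  | HF f => 1 <= p <= ar f
  | HAux f i j => p = ar f + i + j - 1
  end.

Definition mu_ups (ups : F -> nat -> Prop) (s : hsym F) (p : nat) : Prop :=
  match s with
  | HF f => ups f p
  | _ => mu s p
  end.

Fixpoint xi (st : term (hsym F)) (t : term F) : term (hsym F) :=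
  match t with
  | Var x => Var x
  | Fun g ts => Fun (HF g) (map (xi st) ts ++ repeat st (mf g))
  end.

Definition xiT := xi htop.

(* ap t v : v in AP(t), for a (linear) constructor term t; variable freshness and
   distinctness is imposed via linearity of the left-hand sides below *)
Inductive ap : term F -> term (hsym F) -> Prop :=
| ap_other f ts g xs :
    g <> f -> length xs = ar g ->
    ap (Fun f ts) (Fun (HF g) (map Var xs ++ repeat hbot (mf g)))
| ap_arg f ts i ti u xs :
    nth_error ts (i - 1) = Some ti -> 1 <= i -> ap ti u -> length xs = length ts ->
    ap (Fun f ts) (Fun (HF f) (repl (map Var xs) i [u])).

Definition LA (rho : crule F) : list (term (hsym F)) := map xiT (lhs_args rho).
Definition BS (rho : crule F) : list (term (hsym F)) := map (fun c => xiT (snd c)) (conds rho).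

(* xi_rule l r c : l -> r is a rule of Xi(R) of cost c (1 for types (1),(3)) *)
Inductive xi_rule : term (hsym F) -> term (hsym F) -> nat -> Prop :=
| xr1 f i rho xs :
    1 <= i -> nth_error (Rs f) (i - 1) = Some rho -> conds rho = [] ->
    length xs = mf f ->
    linear (Fun (HF f) (LA rho ++ repl (map Var xs) i [htop])) ->
    xi_rule (Fun (HF f) (LA rho ++ repl (map Var xs) i [htop])) (xiT (rhs rho)) 1
| xr2 f i rho xs a b :
    1 <= i -> nth_error (Rs f) (i - 1) = Some rho -> nth_error (conds rho) 0 = Some (a, b) ->
    length xs = mf f ->
    linear (Fun (HF f) (LA rho ++ repl (map Var xs) i [htop])) ->
    xi_rule (Fun (HF f) (LA rho ++ repl (map Var xs) i [htop]))
            (Fun (HAux f i 1) (LA rho ++ repl (map Var xs) i [xiT a])) 0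
| xr3 f i rho xs :
    1 <= i -> nth_error (Rs f) (i - 1) = Some rho -> 0 < length (conds rho) ->
    length xs = mf f ->
    linear (Fun (HAux f i (length (conds rho))) (LA rho ++ repl (map Var xs) i (BS rho))) ->
    xi_rule (Fun (HAux f i (length (conds rho))) (LA rho ++ repl (map Var xs) i (BS rho)))
            (xiT (rhs rho)) 1
| xr4 f i rho xs j a b :
    1 <= i -> nth_error (Rs f) (i - 1) = Some rho ->
    1 <= j -> j < length (conds rho) ->
    nth_error (conds rho) j = Some (a, b) ->   (* a = a_{j+1} *)
    length xs = mf f ->
    linear (Fun (HAux f i j) (LA rho ++ repl (map Var xs) i (firstn j (BS rho)))) ->
    xi_rule (Fun (HAux f i j) (LA rho ++ repl (map Var xs) i (firstn j (BS rho))))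
            (Fun (HAux f i (S j))
                 (LA rho ++ repl (map Var xs) i (firstn j (BS rho) ++ [xiT a]))) 0
| xr5 f i rho xs j a b v :
    1 <= i -> nth_error (Rs f) (i - 1) = Some rho ->
    1 <= j -> j <= length (conds rho) ->
    nth_error (conds rho) (j - 1) = Some (a, b) ->   (* b = b_j *)
    ap b v ->
    length xs = mf f ->
    linear (Fun (HAux f i j) (LA rho ++ repl (map Var xs) i (firstn (j - 1) (BS rho) ++ [v]))) ->
    xi_rule (Fun (HAux f i j) (LA rho ++ repl (map Var xs) i (firstn (j - 1) (BS rho) ++ [v])))
            (Fun (HF f) (LA rho ++ repl (map Var xs) i [hbot])) 0
| xr6 f i rho xs ys j lj v :
    1 <= i -> nth_error (Rs f) (i - 1) = Some rho ->
    1 <= j -> nth_error (lhs_args rho) (j - 1) = Some lj ->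
    ap lj v ->
    length xs = mf f -> length ys = ar f ->
    linear (Fun (HF f) (repl (map Var ys) j [v] ++ repl (map Var xs) i [htop])) ->
    xi_rule (Fun (HF f) (repl (map Var ys) j [v] ++ repl (map Var xs) i [htop]))
            (Fun (HF f) (repl (map Var ys) j [v] ++ repl (map Var xs) i [hbot])) 0.

Inductive hstep (nu : hsym F -> nat -> Prop) :
    term (hsym F) -> term (hsym F) -> nat -> Prop :=
| hstep_root l r c sg : xi_rule l r c -> hstep nu (subst sg l) (subst sg r) c
| hstep_ctx g ls s t rs c :
    nu g (S (length ls)) -> hstep nu s t c ->
    hstep nu (Fun g (ls ++ s :: rs)) (Fun g (ls ++ t :: rs)) c.

Inductive hsteps (nu : hsym F -> nat -> Prop) :
    term (hsym F) -> term (hsym F) -> nat -> Prop :=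
| hsteps_refl s : hsteps nu s s 0
| hsteps_step s t u c1 c2 : hstep nu s t c1 -> hsteps nu t u c2 -> hsteps nu s u (c1 + c2).

Definition hinf (nu : hsym F -> nat -> Prop) (s : term (hsym F)) : Prop :=
  exists sq : nat -> term (hsym F), sq 0 = s /\ forall i, exists c, hstep nu (sq i) (sq (S i)) c.

Definition dh_nu (nu : hsym F -> nat -> Prop) (s : term (hsym F)) : enat :=
  esup (fun x => (exists t c, hsteps nu s t c /\ x = fin c) \/ (x = inf /\ hinf nu s)).

Definition hbasic (s : term (hsym F)) : Prop :=
  allsyms hsym_ok s /\ vars s = [] /\
  exists g ss, s = Fun g ss /\
    match g with
    | HF f => is_defined f
    | HAux f _ _ => is_defined f
    | _ => False
    end /\
    Forall (allsyms (fun h _ => match h with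
                                | HF c => is_constructor c
                                | HBot | HTop => True
                                | HAux _ _ _ => False
                                end)) ss.

Definition hsize (s : term (hsym F)) : nat :=
  wsize (fun h => match h with HTop => 0 | _ => 1 end) s.

Definition rc (nu : hsym F -> nat -> Prop) (n : nat) : enat :=
  esup (fun x => exists s, hbasic s /\ hsize s <= n /\ x = dh_nu nu s).

End CCTRS.

(* A labeled term f_R(t_1,...,t_n) is encoded as the H-term
   f(t_1',...,t_n',s_1,...,s_m) whose extra argument s_i is ⊤ if rho^f_i is
   still in R and ⊥ otherwise; on unlabeled terms this is ξ_⊤.  Call a labeled
   term guarded if every argument at a position not selected by υ is a
   constructor term.  From a guarded term every labeled step is simulated, at a
   μυ-active position, by a nonempty μυ-reduction of the same cost: a ⊥-step by
   a rule of type (6), a successful (failed) step by a type (2) step, the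
   condition reductions inside the active argument of f_i^j linked by type (4)
   steps, and a final type (3) (type (5)) step.  A failed match or condition
   leaves a clash between a linear labeled normal form and a linear constructor
   term b, and at a clash the encoded normal form is an instance of a pattern in
   AP(b).  Usability of
   υ makes guardedness propagate from the redex to each condition and to the
   contractum.  Descents ⇀_▷ into a condition also land at an active position,
   so infinite labeled reductions become infinite μυ-reductions.  Hence
   dh(label t) ≤ dh_μυ(ξ_⊤ t) for ground basic t, and ξ_⊤ t is a basic term of
   the same size. *)

From Stdlib Require Import List Arith Lia Classical ClassicalEpsilon.
Import ListNotations.

Section TermInd.
Context {Sig : Type} (P : term Sig -> Prop)
  (HVar : forall x, P (Var x))
  (HFun : forall g ts, Forall P ts -> P (Fun g ts)).

Fixpoint term_ind_nested (t : term Sig) : P t :=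
  match t with
  | Var x => HVar x
  | Fun g ts => HFun g ts ((fix go (l : list (term Sig)) : Forall P l :=
        match l with
        | [] => Forall_nil _
        | u :: l' => Forall_cons _ (term_ind_nested u) (go l')
        end) ts)
  end.
End TermInd.

Lemma ele_refl x : ele x x.
Proof. destruct x; simpl; auto. Qed.

Lemma ele_trans x y z : ele x y -> ele y z -> ele x z.
Proof. destruct x, y, z; simpl; intros; auto; try lia; contradiction. Qed.

Lemma is_lub_of_bounded N P : (forall y, P y -> ele y (fin N)) -> exists x, is_lub P x.
Proof.
  revert P; induction N as [|N IH]; intros P HP.
  - exists (fin 0). split.
    + intros y Hy. apply HP in Hy. destruct y; simpl in *; auto.
    + intros z _. destruct z; simpl; auto. lia.
  - destruct (classic (P (fin (S N)))) as [H|H].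
    + exists (fin (S N)). split; auto.
    + apply IH. intros y Hy. pose proof (HP y Hy). destruct y; simpl in *; auto.
      destruct (Nat.eq_dec n (S N)); [subst; contradiction|lia].
Qed.

Lemma is_lub_exists P : exists x, is_lub P x.
Proof.
  destruct (classic (exists N, forall y, P y -> ele y (fin N))) as [[N HN]|H].
  - eapply is_lub_of_bounded; eauto.
  - exists inf. split.
    + intros; destruct y; simpl; auto.
    + intros z Hz. destruct z; simpl; auto. exfalso; apply H; eauto.
Qed.

Lemma esup_spec P : is_lub P (esup P).
Proof. unfold esup. apply epsilon_spec, is_lub_exists. Qed.

Lemma esup_mono (P Q : enat -> Prop) :
  (forall y, P y -> exists y', Q y' /\ ele y y') -> ele (esup P) (esup Q).
Proof.
  intros H. destruct (esup_spec P) as [_ HP]. apply HP.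
  intros y Hy. destruct (H y Hy) as [y' [Hq Hle]].
  destruct (esup_spec Q) as [HQ _]. eapply ele_trans; eauto.
Qed.

Lemma firstn_In {A} n (l : list A) x : In x (firstn n l) -> In x l.
Proof. intros H. rewrite <- (firstn_skipn n l). apply in_or_app; auto. Qed.

Lemma skipn_In {A} n (l : list A) x : In x (skipn n l) -> In x l.
Proof. intros H. rewrite <- (firstn_skipn n l). apply in_or_app; auto. Qed.

Lemma firstn_S_nth {A} (l : list A) j x :
  nth_error l j = Some x -> firstn (S j) l = firstn j l ++ [x].
Proof.
  revert l; induction j; intros [|a l] H; simpl in *; try discriminate.
  - inversion H; auto.
  - rewrite (IHj l H). auto.
Qed.

Lemma list_sum_firstn_S (cs : list nat) j c : nth_error cs j = Some c ->
  list_sum (firstn (S j) cs) = list_sum (firstn j cs) + c.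
Proof. intros H. rewrite (firstn_S_nth _ _ _ H), list_sum_app. simpl. lia. Qed.

Lemma nth_error_middle {A} (ls rs : list A) x : nth_error (ls ++ x :: rs) (length ls) = Some x.
Proof. rewrite nth_error_app2 by lia. rewrite Nat.sub_diag. auto. Qed.

Lemma flat_map_one {A B} (f : A -> list B) x : flat_map f [x] = f x.
Proof. simpl. apply app_nil_r. Qed.

Lemma map_seq_nth {A B} (f : A -> B) (l : list A) d N :
  map (fun i => f (nth (i - N) l d)) (seq N (length l)) = map f l.
Proof.
  revert N; induction l as [|a l IH]; intros N; simpl; auto.
  rewrite Nat.sub_diag. f_equal. rewrite <- (IH (S N)). apply map_ext_in.
  intros i Hi. apply in_seq in Hi. replace (i - N) with (S (i - S N)) by lia. auto.
Qed.

Lemma NoDup_app_disj {A} (l1 l2 : list A) x : NoDup (l1 ++ l2) -> In x l1 -> In x l2 -> False.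
Proof.
  induction l1; simpl; intros H H1 H2; auto. inversion H as [|a' l' Hn Hnd]; subst.
  destruct H1 as [<-|H1]; eauto. apply Hn, in_or_app; auto.
Qed.

Lemma NoDup_insert {A} (l1 v l2 : list A) : NoDup (l1 ++ l2) -> NoDup v ->
  (forall x, In x v -> In x (l1 ++ l2) -> False) -> NoDup (l1 ++ v ++ l2).
Proof.
  induction l1 as [|a l1 IH]; simpl; intros H Hv Hd.
  - apply NoDup_app; auto.
  - inversion H as [|a' l' Hn Hnd]; subst. constructor.
    + intros Hin. apply in_app_or in Hin as [Hin|Hin]; [apply Hn, in_or_app; auto|].
      apply in_app_or in Hin as [Hin|Hin]; [|apply Hn, in_or_app; auto].
      eapply Hd; eauto.
    + apply IH; auto. intros x Hx Hx'. eapply Hd; eauto.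
Qed.

Lemma NoDup_firstn_skipn {A} (l : list A) i : NoDup l -> NoDup (firstn i l ++ skipn (S i) l).
Proof.
  intros H. rewrite <- (firstn_skipn i l) in H.
  replace (skipn (S i) l) with (tl (skipn i l)).
  2:{ clear H. revert l; induction i; intros [|a l]; simpl; auto. }
  destruct (skipn i l) eqn:E; simpl.
  - rewrite app_nil_r in *; auto.
  - eapply NoDup_remove_1; eauto.
Qed.

Lemma repl_nth {A} (l : list A) i d : i < length l -> repl l (S i) [nth i l d] = l.
Proof.
  unfold repl. intros H. replace (S i - 1) with i by lia.
  revert l H; induction i; intros l H; destruct l; simpl in *; try lia; auto.
  rewrite IHi; auto; lia.
Qed.

Lemma repl_nth_error {A} (l : list A) i x : nth_error l i = Some x -> repl l (S i) [x] = l.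
Proof.
  intros H. rewrite <- (nth_error_nth l i x H) at 1.
  apply repl_nth, nth_error_Some. congruence.
Qed.

Lemma map_repl {A B} (f : A -> B) l i us : map f (repl l i us) = repl (map f l) i (map f us).
Proof. unfold repl. rewrite !map_app, firstn_map, skipn_map. auto. Qed.

Lemma length_repl {A} (l : list A) i us : 1 <= i <= length l ->
  length (repl l i us) = length l - 1 + length us.
Proof. unfold repl. intros H. rewrite !length_app, length_firstn, length_skipn. lia. Qed.

Lemma flat_map_repl {A B} (f : A -> list B) l i us :
  flat_map f (repl l i us) =
  flat_map f (firstn (i - 1) l) ++ flat_map f us ++ flat_map f (skipn i l).
Proof. unfold repl. rewrite !flat_map_app. auto. Qed.

Lemma nth_repl {A} (l : list A) i x m d : i < length l ->
  nth m (repl l (S i) [x]) d = if m =? i then x else nth m l d.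
Proof.
  intros Hi. unfold repl. replace (S i - 1) with i by lia.
  destruct (Nat.ltb_spec m i).
  - rewrite app_nth1 by (rewrite length_firstn; lia). rewrite nth_firstn.
    destruct (Nat.ltb_spec m i); try lia. destruct (Nat.eqb_spec m i); try lia. auto.
  - rewrite app_nth2 by (rewrite length_firstn; lia). rewrite length_firstn.
    replace (Nat.min i (length l)) with i by lia.
    destruct (Nat.eqb_spec m i).
    + subst. rewrite Nat.sub_diag. auto.
    + replace (m - i) with (S (m - S i)) by lia. cbn [app nth].
      rewrite nth_skipn. f_equal. lia.
Qed.

Lemma allsyms_Fun {Sig} (P : Sig -> nat -> Prop) g ts :
  allsyms P (Fun g ts) <-> P g (length ts) /\ forall u, In u ts -> allsyms P u.
Proof.
  simpl. split.
  - intros [H1 H2]. split; auto. clear H1. induction ts; simpl in *; [tauto|].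
    destruct H2. intros u [<-|Hu]; auto.
  - intros [H1 H2]. split; auto. clear H1. induction ts; simpl in *; auto.
Qed.

Lemma vars_Fun {Sig} (g : Sig) ts : vars (Fun g ts) = flat_map vars ts.
Proof. reflexivity. Qed.

Lemma flat_map_vars_Var {Sig} (l : list nat) : flat_map (@vars Sig) (map Var l) = l.
Proof. induction l; simpl; auto. rewrite IHl; auto. Qed.

Lemma subst_ext {Sig} (s1 s2 : nat -> term Sig) t :
  (forall x, In x (vars t) -> s1 x = s2 x) -> subst s1 t = subst s2 t.
Proof.
  induction t as [y|g ts IH] using term_ind_nested; simpl; intros Hs; auto.
  f_equal. induction IH as [|u ts Hu IH' IHl]; simpl in *; auto.
  rewrite Hu, IHl; auto; intros; apply Hs; apply in_or_app; auto.
Qed.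

Lemma subst_id {Sig} (s : nat -> term Sig) t :
  (forall x, In x (vars t) -> s x = Var x) -> subst s t = t.
Proof.
  induction t as [y|g ts IH] using term_ind_nested; simpl; intros Hs; auto.
  f_equal. induction IH as [|u ts Hu IH' IHl]; simpl in *; auto.
  rewrite Hu, IHl; auto; intros; apply Hs; apply in_or_app; auto.
Qed.

Lemma map_subst_repeat {Sig} (th : nat -> term Sig) (x : term Sig) n :
  vars x = [] -> map (subst th) (repeat x n) = repeat x n.
Proof.
  intros H. rewrite map_repeat, subst_id; auto. rewrite H. contradiction.
Qed.

Lemma in_vars_subterm {Sig} (t : term Sig) x :
  In x (vars t) -> exists p, subterm_at t p = Some (Var x).
Proof.
  induction t as [y|g ts IH] using term_ind_nested; simpl; intros Hx.
  - destruct Hx as [<-|[]]. exists []; auto.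
  - apply in_flat_map in Hx as [u [Hu Hx]].
    apply In_nth_error in Hu as [k Hk].
    rewrite Forall_forall in IH. destruct (IH u (nth_error_In _ _ Hk) Hx) as [p Hp].
    exists (S k :: p). simpl. rewrite Hk. auto.
Qed.

Lemma NoDup_flat_map_vars {Sig} (l : list (term Sig)) : (forall t, In t l -> NoDup (vars t)) ->
  (forall i j u v, i <> j -> nth_error l i = Some u -> nth_error l j = Some v ->
     disjoint (vars u) (vars v)) ->
  NoDup (flat_map vars l).
Proof.
  induction l as [|a l IH]; intros H1 H2; simpl; [constructor|].
  apply NoDup_app.
  - apply H1; simpl; auto.
  - apply IH. intros; apply H1; simpl; auto. intros i j u v Hij Hu Hv. apply (H2 (S i) (S j)); auto.
  - intros x Hx Hx'. apply in_flat_map in Hx' as [v [Hv Hxv]].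
    apply In_nth_error in Hv as [j Hj]. apply (H2 0 (S j) a v) with (x := x); auto.
Qed.

Lemma NoDup_flat_map_In {A B} (f : A -> list B) l x : NoDup (flat_map f l) -> In x l -> NoDup (f x).
Proof.
  induction l as [|a l IH]; simpl; [tauto|]. intros H [<-|Hx].
  - eapply NoDup_app_remove_r; eauto.
  - apply IH; auto. eapply NoDup_app_remove_l; eauto.
Qed.

Lemma in_flat_map_vars_firstn {Sig} (ts : list (term Sig)) n x :
  In x (flat_map vars (firstn n ts)) ->
  exists j t p, j < n /\ nth_error ts j = Some t /\ subterm_at t p = Some (Var x).
Proof.
  intros Hx. apply in_flat_map in Hx as [t [Ht Hx]].
  apply In_nth_error in Ht as [j Hj]. rewrite nth_error_firstn in Hj.
  destruct (Nat.ltb_spec j n); [|discriminate].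
  destruct (in_vars_subterm _ _ Hx) as [p Hp]. exists j, t, p. auto.
Qed.

Definition block_subst {Sig} (N : nat) (ws : list (term Sig)) (th : nat -> term Sig)
  (x : nat) : term Sig :=
  if N <=? x then if x <? N + length ws then nth (x - N) ws (Var 0) else th x else th x.

Lemma block_subst_block {Sig} N (ws : list (term Sig)) th :
  map (subst (block_subst N ws th)) (map Var (seq N (length ws))) = ws.
Proof.
  rewrite map_map. rewrite <- (map_id ws) at 2.
  rewrite <- (map_seq_nth (fun w => w) ws (Var 0) N). apply map_ext_in.
  intros x Hx. apply in_seq in Hx. simpl. unfold block_subst.
  destruct (Nat.leb_spec N x), (Nat.ltb_spec x (N + length ws)); simpl; auto; lia.
Qed.

Lemma subst_block_subst_outside {Sig} N (ws : list (term Sig)) th t :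
  (forall x, In x (vars t) -> x < N \/ N + length ws <= x) ->
  subst (block_subst N ws th) t = subst th t.
Proof.
  intros H. apply subst_ext. intros x Hx. unfold block_subst.
  destruct (H x Hx); destruct (Nat.leb_spec N x), (Nat.ltb_spec x (N + length ws)); simpl; auto; lia.
Qed.

Section Simulation.
Context {F : Type} (ar : F -> nat) (Rs : F -> list (crule F)) (ups : F -> nat -> Prop).

Local Notation nu := (mu_ups ar ups).

Definition lsym_head (s : lsym F) : F := match s with LC c => c | LD f _ => f end.

Definition flag (L : list nat) (m : nat) : term (hsym F) :=
  if in_dec Nat.eq_dec m L then htop else hbot.

(* L holds 0-based indices into Rs f, while Xi(R) numbers the rules of f from 1:
   rule i of L is the argument at position S i of [rule_flags f L]. *)
Definition rule_flags (f : F) (L : list nat) : list (term (hsym F)) :=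
  map (flag L) (seq 0 (mf Rs f)).

Definition lsym_flags (s : lsym F) : list (term (hsym F)) :=
  match s with LC _ => [] | LD f L => rule_flags f L end.

Fixpoint encode (t : term (lsym F)) : term (hsym F) :=
  match t with
  | Var x => Var x
  | Fun s ts => Fun (HF (lsym_head s)) (map encode ts ++ lsym_flags s)
  end.

Lemma encode_LD f L ts : encode (Fun (LD f L) ts) = Fun (HF f) (map encode ts ++ rule_flags f L).
Proof. reflexivity. Qed.

Lemma encode_middle g ls x rs :
  encode (Fun g (ls ++ x :: rs)) =
  Fun (HF (lsym_head g)) (map encode ls ++ encode x :: (map encode rs ++ lsym_flags g)).
Proof. simpl. rewrite map_app. simpl. rewrite <- app_assoc. auto. Qed.

Lemma length_rule_flags f L : length (rule_flags f L) = mf Rs f.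
Proof. unfold rule_flags. rewrite length_map, length_seq. auto. Qed.

Lemma nth_rule_flags f L m : m < mf Rs f -> nth m (rule_flags f L) hbot = flag L m.
Proof.
  intros Hm. unfold rule_flags.
  rewrite (nth_indep _ _ (flag L 0)) by (rewrite length_map, length_seq; auto).
  rewrite map_nth, seq_nth; auto.
Qed.

Lemma rule_flags_all f : rule_flags f (seq 0 (mf Rs f)) = repeat htop (mf Rs f).
Proof.
  apply (nth_ext _ _ hbot hbot); rewrite ?length_rule_flags, ?repeat_length; auto.
  intros m Hm. rewrite nth_rule_flags, nth_repeat_lt by auto. unfold flag.
  destruct (in_dec Nat.eq_dec m (seq 0 (mf Rs f))) as [|Hn]; auto.
  exfalso. apply Hn, in_seq. lia.
Qed.

Lemma rule_flags_none f : rule_flags f [] = repeat hbot (mf Rs f).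
Proof. unfold rule_flags, flag. simpl. rewrite map_const, length_seq. auto. Qed.

Lemma rule_flags_top f L i : In i L -> i < mf Rs f ->
  repl (rule_flags f L) (S i) [htop] = rule_flags f L.
Proof.
  intros HL Hi. replace htop with (nth i (rule_flags f L) hbot) at 1.
  - apply repl_nth. rewrite length_rule_flags; auto.
  - rewrite nth_rule_flags by auto. unfold flag.
    destruct (in_dec Nat.eq_dec i L); tauto.
Qed.

Lemma in_remove_idx i L m : In m (remove_idx i L) <-> In m L /\ m <> i.
Proof.
  unfold remove_idx. rewrite filter_In, Bool.negb_true_iff, Nat.eqb_neq. intuition.
Qed.

Lemma rule_flags_remove f L i : i < mf Rs f ->
  rule_flags f (remove_idx i L) = repl (rule_flags f L) (S i) [hbot].
Proof.
  intros Hi. apply (nth_ext _ _ hbot hbot).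
  - rewrite length_repl by (rewrite length_rule_flags; lia). rewrite !length_rule_flags. simpl. lia.
  - intros m Hm. rewrite length_rule_flags in Hm.
    rewrite nth_repl, !nth_rule_flags by (rewrite ?length_rule_flags; auto). unfold flag.
    destruct (Nat.eqb_spec m i) as [->|Hne].
    + destruct (in_dec Nat.eq_dec i (remove_idx i L)) as [Hr|]; auto.
      apply in_remove_idx in Hr. tauto.
    + destruct (in_dec Nat.eq_dec m (remove_idx i L)) as [Hr|Hr], (in_dec Nat.eq_dec m L);
        rewrite in_remove_idx in Hr; tauto.
Qed.

Definition label_sym (g : F) : lsym F :=
  match Rs g with [] => LC g | _ => LD g (seq 0 (length (Rs g))) end.

Lemma lsym_head_label_sym g : lsym_head (label_sym g) = g.
Proof. unfold label_sym; destruct (Rs g); auto. Qed.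

Lemma lsub_Fun sg g ts : lsub Rs sg (Fun g ts) = Fun (label_sym g) (map (lsub Rs sg) ts).
Proof. unfold lsub, label_sym. simpl. rewrite map_map. auto. Qed.

Lemma lsub_Var_label t : lsub Rs Var t = label Rs t.
Proof. unfold lsub. apply subst_id. auto. Qed.

Lemma encode_lsub sg t : encode (lsub Rs sg t) = subst (fun x => encode (sg x)) (xiT Rs t).
Proof.
  induction t as [x|g ts IH] using term_ind_nested; auto.
  rewrite lsub_Fun. unfold xiT. simpl. rewrite map_app, map_subst_repeat by reflexivity.
  assert (Hargs : map encode (map (lsub Rs sg) ts) =
                  map (subst (fun x => encode (sg x))) (map (xi Rs htop) ts)).
  { induction IH; simpl; f_equal; auto. }
  rewrite lsym_head_label_sym, Hargs. f_equal. f_equal.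
  pose proof (rule_flags_all g) as Hall. unfold label_sym, mf in *.
  destruct (Rs g); auto.
Qed.

Lemma encode_label t : encode (label Rs t) = xiT Rs t.
Proof. rewrite <- lsub_Var_label, encode_lsub. apply subst_id. auto. Qed.

Lemma vars_xiT t : vars (xiT Rs t) = vars t.
Proof.
  unfold xiT. induction t as [x|g ts IH] using term_ind_nested; simpl; auto.
  rewrite flat_map_app. replace (flat_map vars (repeat (@htop F) (mf Rs g))) with (@nil nat).
  - rewrite app_nil_r. induction IH; simpl; auto. rewrite H, IHIH; auto.
  - induction (mf Rs g); simpl; auto.
Qed.

Lemma flat_map_vars_xiT l : flat_map vars (map (xiT Rs) l) = flat_map vars l.
Proof. induction l as [|a l IH]; auto. simpl. rewrite vars_xiT, IH. auto. Qed.

Definition lwf : term (lsym F) -> Prop := allsyms (fun s n => n = ar (lsym_head s)).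

Lemma lwf_Fun s us : lwf (Fun s us) -> length us = ar (lsym_head s) /\ forall u, In u us -> lwf u.
Proof. intros H. apply allsyms_Fun in H. exact H. Qed.

Lemma wf_Fun g bs : wf ar (Fun g bs) -> length bs = ar g /\ forall u, In u bs -> wf ar u.
Proof. intros H. apply allsyms_Fun in H. exact H. Qed.

Lemma cterm_Fun g bs : cterm Rs (Fun g bs) -> is_constructor Rs g /\ forall u, In u bs -> cterm Rs u.
Proof. intros H. apply allsyms_Fun in H. exact H. Qed.

Lemma lnf_Fun s us : lnf Rs (Fun s us) ->
  (match s with LC c => is_constructor Rs c | LD f L => is_defined Rs f /\ L = [] end) /\
  forall u, In u us -> lnf Rs u.
Proof. intros H. apply allsyms_Fun in H. exact H. Qed.

Lemma lsym_flags_lnf s us : lnf Rs (Fun s us) -> lsym_flags s = repeat hbot (mf Rs (lsym_head s)).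
Proof.
  intros H. apply lnf_Fun in H as [H _]. destruct s as [c|f L]; simpl.
  - unfold is_constructor, mf in *. rewrite H. reflexivity.
  - destruct H as [_ ->]. apply rule_flags_none.
Qed.

Inductive lcterm : term (lsym F) -> Prop :=
| lcterm_var x : lcterm (Var x)
| lcterm_fun c ts : is_constructor Rs c -> length ts = ar c -> (forall u, In u ts -> lcterm u) ->
    lcterm (Fun (LC c) ts).

Inductive guarded : term (lsym F) -> Prop :=
| guarded_var x : guarded (Var x)
| guarded_fun s ts : length ts = ar (lsym_head s) -> (forall c, s = LC c -> is_constructor Rs c) ->
    (forall k u, nth_error ts k = Some u -> guarded u /\ (~ ups (lsym_head s) (S k) -> lcterm u)) ->
    guarded (Fun s ts).

Lemma lcterm_in c ts u : lcterm (Fun c ts) -> In u ts -> lcterm u.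
Proof. intros H Hu. inversion H; subst; auto. Qed.

Lemma guarded_of_lcterm t : lcterm t -> guarded t.
Proof.
  induction t as [x|g ts IH] using term_ind_nested; intros H; inversion H; subst; constructor; auto.
  - intros c0 Hc; inversion Hc; subst; auto.
  - intros k u Hk. rewrite Forall_forall in IH. assert (In u ts) by (eapply nth_error_In; eauto).
    split; auto.
Qed.

Lemma guarded_in s ts u : guarded (Fun s ts) -> In u ts -> guarded u.
Proof.
  intros H Hu. apply In_nth_error in Hu as [k Hk]. inversion H; subst. apply (H4 k u Hk).
Qed.

Lemma guarded_middle g ls s rs : guarded (Fun g (ls ++ s :: rs)) ->
  guarded s /\ (~ ups (lsym_head g) (S (length ls)) -> lcterm s).
Proof. intros H. inversion H; subst. apply H4, nth_error_middle. Qed.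

Lemma guarded_replace g ls s t rs : guarded (Fun g (ls ++ s :: rs)) -> guarded t ->
  ups (lsym_head g) (S (length ls)) -> guarded (Fun g (ls ++ t :: rs)).
Proof.
  intros H Ht Hu. inversion H as [|g0 ts0 Hl Hc Ha]; subst. constructor; auto.
  - rewrite length_app in *. simpl in *. auto.
  - intros k u Hk. rewrite nth_error_app in Hk.
    destruct (Nat.ltb_spec k (length ls)).
    + apply Ha. rewrite nth_error_app1; auto.
    + destruct (k - length ls) eqn:E.
      * simpl in Hk. inversion Hk; subst. split; auto. intros Hn.
        replace k with (length ls) in Hn by lia. contradiction.
      * apply Ha. rewrite nth_error_app2 by lia. rewrite E. auto.
Qed.

Lemma guarded_relabel f L L' ts : guarded (Fun (LD f L) ts) -> guarded (Fun (LD f L') ts).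
Proof. intros H; inversion H; subst. constructor; auto. intros c Hc; discriminate. Qed.

Lemma lwf_of_guarded_subst sg (u : term (lsym F)) : guarded (subst sg u) -> lwf u.
Proof.
  induction u as [x|s us IH] using term_ind_nested; intros H; [unfold lwf; simpl; auto|].
  unfold lwf. apply allsyms_Fun. simpl in H. inversion H; subst. rewrite length_map in H2.
  split; auto. intros u Hu. rewrite Forall_forall in IH. apply IH; auto.
  eapply guarded_in; eauto. apply in_map; auto.
Qed.

Lemma lstep_not_lcterm s t c : lstep Rs s t c -> ~ lcterm s.
Proof.
  induction 1; intros HC; inversion HC; subst.
  apply IHlstep. eapply lcterm_in; eauto. apply in_or_app; simpl; auto.
Qed.

Lemma lcond_not_lcterm s t : lcond Rs s t -> ~ lcterm s.
Proof.
  induction 1.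
  - destruct H. intros HC; inversion HC.
  - intros HC. apply IHlcond. inversion HC; subst; auto.
Qed.

Lemma active_of_guarded_middle g ls s rs : guarded (Fun g (ls ++ s :: rs)) -> ~ lcterm s ->
  ups (lsym_head g) (S (length ls)).
Proof.
  intros HG Hs. destruct (guarded_middle _ _ _ _ HG) as [_ HC].
  apply NNPP. intros Hn. apply Hs, HC, Hn.
Qed.

Lemma lcterm_lsub sg t : wf ar t -> cterm Rs t -> (forall x, In x (vars t) -> lcterm (sg x)) ->
  lcterm (lsub Rs sg t).
Proof.
  induction t as [x|g ts IH] using term_ind_nested; intros Hw Hc Hv.
  - apply Hv; simpl; auto.
  - rewrite lsub_Fun. apply wf_Fun in Hw as [Hw1 Hw2]. apply cterm_Fun in Hc as [Hc1 Hc2].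
    unfold label_sym. unfold is_constructor in Hc1. rewrite Hc1. constructor.
    + unfold is_constructor; auto.
    + rewrite length_map; auto.
    + intros u' Hu'. apply in_map_iff in Hu' as [u [<- Hu]].
      rewrite Forall_forall in IH. apply IH; auto.
      intros x Hx; apply Hv. simpl. apply in_flat_map; eauto.
Qed.

Lemma cterm_of_no_defined_subterm t :
  (forall p g us, subterm_at t p = Some (Fun g us) -> ~ is_defined Rs g) -> cterm Rs t.
Proof.
  induction t as [x|g ts IH] using term_ind_nested; intros H; [unfold cterm; simpl; auto|].
  unfold cterm. apply allsyms_Fun. split.
  - specialize (H [] g ts eq_refl). unfold is_defined, is_constructor in *.
    destruct (Rs g); auto. exfalso; apply H; discriminate.
  - intros u Hu. apply In_nth_error in Hu as [k Hk]. rewrite Forall_forall in IH.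
    apply IH. eapply nth_error_In; eauto.
    intros p g' us Hp. apply (H (S k :: p) g' us). simpl. rewrite Hk. auto.
Qed.

(* The premise on [t] is the usability condition, with [Q x] standing for "x occurs at
   a υ-active position of an earlier b_j". *)
Lemma guarded_lsub (Q : nat -> Prop) sg t : wf ar t ->
  (forall p u, subterm_at t p = Some u ->
     ((exists g us, u = Fun g us /\ is_defined Rs g) \/ (exists x, u = Var x /\ Q x)) ->
     active ups t p) ->
  (forall x, In x (vars t) -> guarded (sg x)) ->
  (forall x, In x (vars t) -> ~ Q x -> lcterm (sg x)) ->
  guarded (lsub Rs sg t).
Proof.
  induction t as [x|g ts IH] using term_ind_nested; intros Hw Ha Hv Hc.
  - apply Hv; simpl; auto.
  - rewrite lsub_Fun. apply wf_Fun in Hw as [Hw1 Hw2]. constructor.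
    + rewrite length_map, lsym_head_label_sym; auto.
    + intros c Hc'. unfold label_sym in Hc'. unfold is_constructor.
      destruct (Rs g) eqn:E; inversion Hc'; subst; auto.
    + intros k u' Hk. rewrite nth_error_map in Hk.
      destruct (nth_error ts k) as [u|] eqn:Eu; inversion Hk; subst; clear Hk.
      rewrite lsym_head_label_sym. rewrite Forall_forall in IH.
      assert (Hin : In u ts) by (eapply nth_error_In; eauto).
      assert (Hvu : forall x, In x (vars u) -> In x (vars (Fun g ts))).
      { intros x Hx. simpl. apply in_flat_map; eauto. }
      assert (Hau : forall p w, subterm_at u p = Some w ->
                 ((exists g us, w = Fun g us /\ is_defined Rs g) \/ (exists x, w = Var x /\ Q x)) ->
                 ups g (S k) /\ active ups u p).
      { intros p w Hp Hd. specialize (Ha (S k :: p) w). simpl in Ha. rewrite Eu in Ha. auto. }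
      split.
      * apply (IH u Hin); auto.
        intros p w Hp Hd. apply (Hau p w Hp Hd).
      * intros Hnu. apply lcterm_lsub; auto.
        -- apply cterm_of_no_defined_subterm. intros p g' us Hp Hd. apply Hnu.
           apply (Hau p (Fun g' us)); eauto.
        -- intros x Hx. apply Hc; auto. intros HQ.
           destruct (in_vars_subterm _ _ Hx) as [p Hp]. apply Hnu.
           apply (Hau p (Var x)); eauto.
Qed.

Lemma lcterm_lsub_var sg t q x : lcterm (lsub Rs sg t) -> subterm_at t q = Some (Var x) ->
  lcterm (sg x).
Proof.
  revert t; induction q as [|i q IH]; intros t HC Hq; simpl in Hq.
  - inversion Hq; subst. auto.
  - destruct t as [|g ts]; try discriminate. destruct i; try discriminate.
    destruct (nth_error ts i) as [u|] eqn:E; try discriminate.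
    apply (IH u); auto. rewrite lsub_Fun in HC. eapply lcterm_in; eauto.
    apply in_map. eapply nth_error_In; eauto.
Qed.

Lemma guarded_lsub_var sg t q x : guarded (lsub Rs sg t) -> subterm_at t q = Some (Var x) ->
  guarded (sg x) /\ (~ active ups t q -> lcterm (sg x)).
Proof.
  revert t; induction q as [|i q IH]; intros t HG Hq; simpl in Hq.
  - inversion Hq; subst. split; auto. intros Ha. exfalso. apply Ha. simpl. auto.
  - destruct t as [|g ts]; try discriminate. destruct i; try discriminate.
    destruct (nth_error ts i) as [u|] eqn:E; try discriminate.
    rewrite lsub_Fun in HG. inversion HG; subst.
    assert (Hn : nth_error (map (lsub Rs sg) ts) i = Some (lsub Rs sg u))
      by (rewrite nth_error_map, E; auto).
    destruct (H3 _ _ Hn) as [HGu HCu]. rewrite lsym_head_label_sym in HCu.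
    destruct (IH u HGu Hq) as [HGx HCx]. split; auto.
    intros Ha. simpl in Ha. rewrite E in Ha.
    destruct (classic (ups g (S i))) as [Hu|Hu].
    + apply HCx. tauto.
    + eapply lcterm_lsub_var; eauto.
Qed.

Lemma erase_Fun s us : erase (Fun s us) = Fun (lsym_head s) (map erase us).
Proof. destruct s; reflexivity. Qed.

Lemma vars_erase (u : term (lsym F)) : vars (erase u) = vars u.
Proof.
  induction u as [x|s us IH] using term_ind_nested; [reflexivity|].
  rewrite erase_Fun. simpl. induction IH; simpl; auto. rewrite H, IHIH; auto.
Qed.

Inductive clash : term (lsym F) -> term F -> Prop :=
| clash_root s us g bs : lsym_head s <> g -> clash (Fun s us) (Fun g bs)
| clash_arg s us g bs k u b : lsym_head s = g -> nth_error us k = Some u ->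
    nth_error bs k = Some b -> clash u b -> clash (Fun s us) (Fun g bs).

(* Pairs over disjoint variables unify independently. *)
Lemma unifiable_args (us : list (term (lsym F))) (bs : list (term F)) :
  length us = length bs ->
  (forall k u b, nth_error us k = Some u -> nth_error bs k = Some b -> unifiable (erase u) b) ->
  NoDup (flat_map vars us) -> NoDup (flat_map vars bs) ->
  disjoint (flat_map vars us) (flat_map vars bs) ->
  exists th, map (fun u => subst th (erase u)) us = map (subst th) bs.
Proof.
  revert bs; induction us as [|u us IH]; intros [|b bs] Hl Hp Hn1 Hn2 Hd; simpl in *;
    try discriminate; [exists Var; auto|].
  destruct (Hp 0 u b eq_refl eq_refl) as [th1 E1].
  destruct (IH bs) as [th2 E2]; auto.
  - intros k u' b' H1 H2. apply (Hp (S k)); auto.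
  - eapply NoDup_app_remove_l; eauto.
  - eapply NoDup_app_remove_l; eauto.
  - intros x Hx1 Hx2. apply (Hd x); apply in_or_app; auto.
  - set (D := vars u ++ vars b).
    set (th := fun y => if in_dec Nat.eq_dec y D then th1 y else th2 y).
    assert (Hin : forall t, incl (vars t) D -> subst th t = subst th1 t).
    { intros t Ht. apply subst_ext. intros x Hx. unfold th.
      destruct (in_dec Nat.eq_dec x D); auto. exfalso; auto. }
    assert (Hout : forall t, (forall x, In x (vars t) -> ~ In x D) -> subst th t = subst th2 t).
    { intros t Ht. apply subst_ext. intros x Hx. unfold th.
      destruct (in_dec Nat.eq_dec x D); auto. exfalso; eapply Ht; eauto. }
    assert (HoutD : forall x, In x (flat_map vars us) \/ In x (flat_map vars bs) -> ~ In x D).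
    { intros x Hx HD. apply in_app_or in HD as [HD|HD]; destruct Hx as [Hx|Hx].
      - eapply (NoDup_app_disj _ _ x Hn1); eauto.
      - apply (Hd x); apply in_or_app; auto.
      - apply (Hd x); apply in_or_app; auto.
      - eapply (NoDup_app_disj _ _ x Hn2); eauto. }
    exists th. f_equal.
    + rewrite !Hin, E1; auto.
      * intros x Hx. apply in_or_app; auto.
      * intros x Hx. rewrite vars_erase in Hx. apply in_or_app; auto.
    + transitivity (map (fun u => subst th2 (erase u)) us); [|rewrite E2].
      * apply map_ext_in. intros a Ha. apply Hout. intros x Hx. rewrite vars_erase in Hx.
        apply HoutD. left. apply in_flat_map; eauto.
      * apply map_ext_in. intros a Ha. symmetry. apply Hout. intros x Hx.
        apply HoutD. right. apply in_flat_map; eauto.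
Qed.

Lemma unifiable_of_no_clash u : forall b, ~ clash u b -> lwf u -> wf ar b ->
  NoDup (vars u) -> NoDup (vars b) -> disjoint (vars u) (vars b) -> unifiable (erase u) b.
Proof.
  induction u as [x|s us IH] using term_ind_nested; intros b Hc Hwu Hwb Hnu Hnb Hd.
  - exists (fun y => if Nat.eqb y x then b else Var y).
    simpl. rewrite Nat.eqb_refl. symmetry. apply subst_id. intros y Hy.
    destruct (Nat.eqb_spec y x); auto. subst. exfalso. apply (Hd x); simpl; auto.
  - destruct b as [y|g bs].
    + exists (fun z => if Nat.eqb z y then erase (Fun s us) else Var z).
      transitivity (erase (Fun s us)).
      * apply subst_id. intros z Hz. rewrite vars_erase in Hz.
        destruct (Nat.eqb_spec z y); auto. subst. exfalso. apply (Hd y); simpl; auto.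
      * simpl. rewrite Nat.eqb_refl. auto.
    + assert (Hsg : lsym_head s = g).
      { apply NNPP. intros Hne. apply Hc. constructor; auto. }
      apply lwf_Fun in Hwu as [Hl1 Hwu]. apply wf_Fun in Hwb as [Hl2 Hwb].
      destruct (unifiable_args us bs) as [th E]; auto; [congruence| |].
      * intros k u b Hu Hb. rewrite Forall_forall in IH.
        assert (Hinu : In u us) by (eapply nth_error_In; eauto).
        assert (Hinb : In b bs) by (eapply nth_error_In; eauto).
        apply IH; eauto using NoDup_flat_map_In.
        -- intros Hc'. apply Hc. eapply clash_arg; eauto.
        -- intros x Hx1 Hx2. apply (Hd x); simpl; apply in_flat_map; eauto.
      * exists th. rewrite erase_Fun. simpl. rewrite Hsg, map_map, E. auto.
Qed.

Lemma clash_of_not_unifiable u b : ~ unifiable (erase u) b -> lwf u -> wf ar b ->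
  NoDup (vars u) -> NoDup (vars b) -> disjoint (vars u) (vars b) -> clash u b.
Proof.
  intros Hu Hw1 Hw2 Hn1 Hn2 Hd. apply NNPP. intros Hno. apply Hu.
  apply unifiable_of_no_clash; auto.
Qed.

Lemma clash_of_not_unifiable_args f us bs : ~ unifiable (Fun f (map erase us)) (Fun f bs) ->
  Forall lwf us -> Forall (wf ar) bs -> length us = length bs ->
  NoDup (flat_map vars us) -> NoDup (flat_map vars bs) ->
  disjoint (flat_map vars us) (flat_map vars bs) ->
  exists k u b, nth_error us k = Some u /\ nth_error bs k = Some b /\ clash u b.
Proof.
  intros Hu Hw1 Hw2 Hl Hn1 Hn2 Hd. apply NNPP. intros Hno. apply Hu.
  destruct (unifiable_args us bs) as [th E]; auto.
  - intros k u b H1 H2. rewrite Forall_forall in Hw1, Hw2.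
    assert (Hinu : In u us) by (eapply nth_error_In; eauto).
    assert (Hinb : In b bs) by (eapply nth_error_In; eauto).
    apply unifiable_of_no_clash; eauto using NoDup_flat_map_In.
    + intros Hc; apply Hno; exists k, u, b; auto.
    + intros x Hx1 Hx2. apply (Hd x); apply in_flat_map; eauto.
  - exists th. simpl. rewrite !map_map, E. auto.
Qed.

Definition ap_match (b : term F) (N : nat) (X : term (hsym F)) : Prop :=
  exists v th, ap ar Rs b v /\ NoDup (vars v) /\ (forall x, In x (vars v) -> N <= x) /\
    subst th v = X.

Lemma encode_subst_Fun tau s us :
  encode (subst tau (Fun s us)) =
  Fun (HF (lsym_head s)) (map (fun u => encode (subst tau u)) us ++ lsym_flags s).
Proof. simpl. rewrite map_map. auto. Qed.

Lemma vars_repeat_ground (t : term (hsym F)) n : vars t = [] -> flat_map vars (repeat t n) = [].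
Proof. intros H. induction n; simpl; auto. rewrite H, IHn. auto. Qed.

Lemma ap_match_root tau s us g bs N : lsym_head s <> g -> lnf Rs (Fun s us) -> lwf (Fun s us) ->
  ap_match (Fun g bs) N (encode (subst tau (Fun s us))).
Proof.
  intros Hne Hl Hw. apply lwf_Fun in Hw as [Hlen _].
  set (ws := map (fun u => encode (subst tau u)) us).
  exists (Fun (HF (lsym_head s)) (map Var (seq N (ar (lsym_head s))) ++ repeat hbot (mf Rs (lsym_head s)))).
  exists (block_subst N ws Var).
  assert (Hvars : vars (Fun (HF (lsym_head s)) (map Var (seq N (ar (lsym_head s))) ++
                                   repeat hbot (mf Rs (lsym_head s)))) = seq N (ar (lsym_head s))).
  { rewrite vars_Fun, flat_map_app, flat_map_vars_Var, vars_repeat_ground, app_nil_r; auto. }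
  rewrite Hvars. split; [|split; [apply seq_NoDup|split]].
  - constructor; auto. apply length_seq.
  - intros x Hx. apply in_seq in Hx. lia.
  - rewrite encode_subst_Fun, (lsym_flags_lnf s us Hl). simpl. f_equal.
    rewrite map_app, map_subst_repeat by reflexivity. f_equal.
    replace (ar (lsym_head s)) with (length ws) by (unfold ws; rewrite length_map; auto).
    apply block_subst_block.
Qed.

Lemma vars_repl_seq_bounds N n k (v : term (hsym F)) : k < n -> NoDup (vars v) ->
  (forall x, In x (vars v) -> N + n <= x) ->
  NoDup (flat_map vars (repl (map Var (seq N n)) (S k) [v])) /\
  forall x, In x (flat_map vars (repl (map Var (seq N n)) (S k) [v])) -> N <= x.
Proof.
  intros Hk Hnd Hge. rewrite flat_map_repl, flat_map_one, firstn_map, skipn_map, !flat_map_vars_Var.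
  replace (S k - 1) with k by lia. split.
  - apply NoDup_insert; auto.
    + apply NoDup_firstn_skipn, seq_NoDup.
    + intros x Hx Hx'. apply Hge in Hx. apply in_app_or in Hx' as [Hx'|Hx'];
        [apply firstn_In in Hx'|apply skipn_In in Hx']; apply in_seq in Hx'; lia.
  - intros x Hx. apply in_app_or in Hx as [Hx|Hx]; [|apply in_app_or in Hx as [Hx|Hx]];
      [apply firstn_In in Hx| |apply skipn_In in Hx]; try apply in_seq in Hx; try apply Hge in Hx;
      lia.
Qed.

Lemma ap_match_arg tau s us bs k u b N : nth_error us k = Some u -> nth_error bs k = Some b ->
  lnf Rs (Fun s us) -> lwf (Fun s us) -> cterm Rs (Fun (lsym_head s) bs) ->
  length us = length bs ->
  ap_match b (N + length bs) (encode (subst tau u)) ->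
  ap_match (Fun (lsym_head s) bs) N (encode (subst tau (Fun s us))).
Proof.
  intros Hu Hb Hl Hw Hc Hlen [v [th [Hap [Hnd [Hge Hth]]]]].
  assert (Hk : k < length bs) by (apply nth_error_Some; congruence).
  set (ws := map (fun u => encode (subst tau u)) us).
  exists (Fun (HF (lsym_head s)) (repl (map Var (seq N (length bs))) (S k) [v])).
  exists (block_subst N ws th).
  destruct (vars_repl_seq_bounds N (length bs) k v) as [Hnd' Hvars]; auto.
  split; [|split; [exact Hnd'|split]].
  - eapply ap_arg with (i := S k); simpl; rewrite ?Nat.sub_0_r; eauto; try lia.
    apply length_seq.
  - exact Hvars.
  - rewrite encode_subst_Fun.
    assert (Hflags : lsym_flags s = []).
    { apply lnf_Fun in Hl as [Hs _]. apply cterm_Fun in Hc as [Hcon _].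
      destruct s as [c|f L]; simpl in *; auto.
      destruct Hs as [Hd _]. contradiction. }
    rewrite Hflags, app_nil_r. simpl. f_equal.
    rewrite map_repl. cbn [map]. rewrite subst_block_subst_outside.
    2:{ intros x Hx. right. apply Hge in Hx. unfold ws. rewrite length_map. lia. }
    replace (length bs) with (length ws) by (unfold ws; rewrite length_map; auto).
    rewrite block_subst_block, Hth. apply repl_nth_error.
    unfold ws. rewrite nth_error_map, Hu. auto.
Qed.

Lemma ap_match_of_clash u b tau : clash u b -> lnf Rs u -> lwf u -> wf ar b -> cterm Rs b ->
  forall N, ap_match b N (encode (subst tau u)).
Proof.
  induction 1 as [s us g bs Hne | s us g bs k u b Hsg Hu Hb Hc IH];
    intros Hl Hwu Hwb Hcb N.
  - apply ap_match_root; auto.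
  - subst g. apply (ap_match_arg tau s us bs k u b N); auto.
    + destruct (lwf_Fun _ _ Hwu) as [Hlu _]. destruct (wf_Fun _ _ Hwb) as [Hlb _]. congruence.
    + assert (Hin_u : In u us) by (eapply nth_error_In; eauto).
      assert (Hin_b : In b bs) by (eapply nth_error_In; eauto).
      apply IH.
      * apply (lnf_Fun _ _ Hl); auto.
      * apply (lwf_Fun _ _ Hwu); auto.
      * apply (wf_Fun _ _ Hwb); auto.
      * apply (cterm_Fun _ _ Hcb); auto.
Qed.

Lemma nth_error_as_cond {A B} (l : list (A * B)) r m a b :
  nth_error l m = Some (a, b) -> nth_error (map fst l ++ [r]) m = Some a.
Proof.
  intros H. assert (m < length l) by (apply nth_error_Some; congruence).
  rewrite nth_error_app1 by (rewrite length_map; lia). rewrite nth_error_map, H. auto.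
Qed.

Lemma nth_error_as_last {A B} (l : list (A * B)) r : nth_error (map fst l ++ [r]) (length l) = Some r.
Proof. rewrite nth_error_app2 by (rewrite length_map; lia). rewrite length_map, Nat.sub_diag. auto. Qed.

Hypothesis Hstrong : strong_cctrs ar Rs.
Hypothesis Husable : usable Rs ups.

Lemma strong_rule f rho : In rho (Rs f) ->
    let bs := map snd (conds rho) in
    let bs0 := lhs rho :: bs in
    lhs_f rho = f /\
    wf ar (lhs rho) /\ wf ar (rhs rho) /\
    Forall (fun c => wf ar (fst c) /\ wf ar (snd c)) (conds rho) /\
    Forall (cterm Rs) (lhs_args rho) /\ Forall (cterm Rs) bs /\
    (forall i j u v, i <> j -> nth_error bs0 i = Some u -> nth_error bs0 j = Some v ->
        disjoint (vars u) (vars v)) /\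
    incl (vars (rhs rho)) (vars (lhs rho) ++ flat_map vars bs) /\
    (forall i a b, nth_error (conds rho) i = Some (a, b) ->
        incl (vars a) (vars (lhs rho) ++ flat_map vars (firstn i bs))) /\
    linear (lhs rho) /\ Forall linear bs.
Proof. intros Hin. destruct (Hstrong f) as [_ H]. apply H; auto. Qed.

Lemma length_lhs_args f rho : In rho (Rs f) -> length (lhs_args rho) = ar f.
Proof.
  intros Hin. destruct (strong_rule f rho Hin) as (Hf & Hw & _).
  unfold lhs in Hw. apply wf_Fun in Hw as [Hw _]. rewrite Hf in Hw. auto.
Qed.

Lemma strong_rule_as f rho i0 ai : In rho (Rs f) ->
  nth_error (map fst (conds rho) ++ [rhs rho]) i0 = Some ai ->
  wf ar ai /\ incl (vars ai) (flat_map vars (firstn (S i0) (lhs rho :: map snd (conds rho)))).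
Proof.
  intros Hin Hai.
  destruct (strong_rule f rho Hin) as (_ & _ & Hwr & Hwc & _ & _ & _ & Hvr & Hvc & _ & _).
  rewrite nth_error_app in Hai. destruct (Nat.ltb_spec i0 (length (map fst (conds rho)))).
  - rewrite nth_error_map in Hai.
    destruct (nth_error (conds rho) i0) as [[a b]|] eqn:E; inversion Hai; subst. split.
    + rewrite Forall_forall in Hwc. apply (Hwc (ai, b)). eapply nth_error_In; eauto.
    + eapply Hvc; eauto.
  - rewrite length_map in *.
    destruct (i0 - length (conds rho)) as [|n] eqn:E2; [|destruct n; discriminate].
    inversion Hai; subst. split; auto.
    cbn [firstn]. rewrite firstn_all2 by (rewrite length_map; lia). auto.
Qed.

Lemma guarded_lhs f L rho sg : In rho (Rs f) ->
  guarded (Fun (LD f L) (map (lsub Rs sg) (lhs_args rho))) -> guarded (lsub Rs sg (lhs rho)).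
Proof.
  intros Hin HG. destruct (strong_rule f rho Hin) as (Hf & _).
  unfold lhs. rewrite lsub_Fun, Hf. unfold label_sym.
  destruct (Rs f) eqn:E; [destruct Hin|]. eapply guarded_relabel; eauto.
Qed.

(* Usability is used here: a variable of a_i that sits at a υ-inactive position also
   sits only at υ-inactive positions of the earlier b_j, hence is bound to a
   constructor term. *)
Lemma guarded_cond_lsub f rho L sg i0 ai :
  In rho (Rs f) ->
  guarded (Fun (LD f L) (map (lsub Rs sg) (lhs_args rho))) ->
  (forall j a b, j < i0 -> nth_error (conds rho) j = Some (a, b) -> guarded (lsub Rs sg b)) ->
  nth_error (map fst (conds rho) ++ [rhs rho]) i0 = Some ai ->
  guarded (lsub Rs sg ai).
Proof.
  intros Hin HG Hb Hai.
  destruct (strong_rule_as f rho i0 ai Hin Hai) as [Hw Hv].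
  set (bs0 := lhs rho :: map snd (conds rho)).
  assert (HGb : forall j bj, j <= i0 -> nth_error bs0 j = Some bj -> guarded (lsub Rs sg bj)).
  { intros [|j] bj Hj Hbj; simpl in Hbj.
    - inversion Hbj; subst. eapply guarded_lhs; eauto.
    - rewrite nth_error_map in Hbj.
      destruct (nth_error (conds rho) j) as [[a b]|] eqn:E; inversion Hbj; subst.
      eapply Hb; [|eauto]. lia. }
  apply (guarded_lsub (fun x => exists j bj q, j <= i0 /\ nth_error bs0 j = Some bj /\
                         active ups bj q /\ subterm_at bj q = Some (Var x))) with (1 := Hw).
  - exact (Husable f rho Hin i0 ai Hai).
  - intros x Hx.
    destruct (in_flat_map_vars_firstn _ _ _ (Hv x Hx)) as (j & bj & q & Hj & Hbj & Hq).
    apply (guarded_lsub_var sg bj q x); auto. apply (HGb j); auto. lia.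
  - intros x Hx HQ.
    destruct (in_flat_map_vars_firstn _ _ _ (Hv x Hx)) as (j & bj & q & Hj & Hbj & Hq).
    apply (guarded_lsub_var sg bj q x); auto; [apply (HGb j); auto; lia|].
    intros Hact. apply HQ. exists j, bj, q. repeat split; auto. lia.
Qed.

Definition conds_simulated (rho : crule F) (sg : nat -> term (lsym F)) (cs : list nat) : Prop :=
  forall m a b c, nth_error (conds rho) m = Some (a, b) -> nth_error cs m = Some c ->
    hsteps ar Rs nu (encode (lsub Rs sg a)) (encode (lsub Rs sg b)) c.

Definition conds_simulated_if_guarded (rho : crule F) (sg : nat -> term (lsym F))
  (cs : list nat) : Prop :=
  forall m a b c, nth_error (conds rho) m = Some (a, b) -> nth_error cs m = Some c ->
    guarded (lsub Rs sg a) ->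
    guarded (lsub Rs sg b) /\ hsteps ar Rs nu (encode (lsub Rs sg a)) (encode (lsub Rs sg b)) c.

Lemma guarded_conditions f L i rho sg cs :
  nth_error (Rs f) i = Some rho ->
  guarded (Fun (LD f L) (map (lsub Rs sg) (lhs_args rho))) ->
  conds_simulated_if_guarded rho sg cs ->
  (forall m a, m <= length cs -> nth_error (map fst (conds rho) ++ [rhs rho]) m = Some a ->
     guarded (lsub Rs sg a)) /\
  conds_simulated rho sg cs.
Proof.
  intros Hrho HG IH. assert (Hin : In rho (Rs f)) by (eapply nth_error_In; eauto).
  assert (Ha : forall n m a, m < n -> m <= length cs ->
                 nth_error (map fst (conds rho) ++ [rhs rho]) m = Some a -> guarded (lsub Rs sg a)).
  { induction n as [|n IHn]; intros m a Hm Hmc Hma; [lia|].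
    apply (guarded_cond_lsub f rho L sg m a Hin HG); auto.
    intros j a' b' Hj Hab. destruct (nth_error cs j) as [c|] eqn:Ec.
    - apply (IH j a' b' c Hab Ec). apply (IHn j a'); [lia|lia|]. eapply nth_error_as_cond; eauto.
    - apply nth_error_None in Ec. lia. }
  split.
  - intros m a. apply (Ha (S m)). lia.
  - intros m a b c Hab Hc. apply (IH m a b c Hab Hc).
    assert (m < length cs) by (apply nth_error_Some; congruence).
    apply (Ha (S m) m a); [lia|lia|]. eapply nth_error_as_cond; eauto.
Qed.

Definition xplus (s t : term (hsym F)) (c : nat) : Prop :=
  exists m c1 c2, hstep ar Rs nu s m c1 /\ hsteps ar Rs nu m t c2 /\ c = c1 + c2.

Lemma hsteps_trans s t u c1 c2 : hsteps ar Rs nu s t c1 -> hsteps ar Rs nu t u c2 ->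
  hsteps ar Rs nu s u (c1 + c2).
Proof.
  induction 1; intros Hn; simpl; auto. rewrite <- Nat.add_assoc. econstructor; eauto.
Qed.

Lemma xplus_hsteps s t u c1 c2 : xplus s t c1 -> hsteps ar Rs nu t u c2 -> xplus s u (c1 + c2).
Proof.
  intros [m [d1 [d2 [H1 [H2 ->]]]]] H3. exists m, d1, (d2 + c2). split; auto. split; [|lia].
  eapply hsteps_trans; eauto.
Qed.

Lemma hsteps_of_xplus s t c : xplus s t c -> hsteps ar Rs nu s t c.
Proof. intros [m [d1 [d2 [H1 [H2 ->]]]]]. econstructor; eauto. Qed.

Lemma xplus_of_hstep s t c : hstep ar Rs nu s t c -> xplus s t c.
Proof. intros H. exists t, c, 0. split; auto. split; [constructor|lia]. Qed.

Lemma hsteps_ctx h ls s t rs c : nu h (S (length ls)) -> hsteps ar Rs nu s t c ->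
  hsteps ar Rs nu (Fun h (ls ++ s :: rs)) (Fun h (ls ++ t :: rs)) c.
Proof. intros Hn. induction 1; [constructor|]. econstructor; eauto. constructor; auto. Qed.

Lemma xplus_ctx h ls s t rs c : nu h (S (length ls)) -> xplus s t c ->
  xplus (Fun h (ls ++ s :: rs)) (Fun h (ls ++ t :: rs)) c.
Proof.
  intros Hn [m [d1 [d2 [H1 [H2 ->]]]]]. exists (Fun h (ls ++ m :: rs)), d1, d2.
  split; [constructor; auto|]. split; auto. apply hsteps_ctx; auto.
Qed.

Definition frame : Type := (hsym F * list (term (hsym F)) * list (term (hsym F)))%type.

Fixpoint plug (C : list frame) (t : term (hsym F)) : term (hsym F) :=
  match C with
  | [] => t
  | (h, ls, rs) :: C' => Fun h (ls ++ plug C' t :: rs)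
  end.

Definition active_ctx (C : list frame) : Prop :=
  Forall (fun fr => match fr with (h, ls, rs) => nu h (S (length ls)) end) C.

Lemma plug_app C1 C2 t : plug (C1 ++ C2) t = plug C1 (plug C2 t).
Proof. induction C1 as [|[[h ls] rs] C IH]; simpl; auto. rewrite IH; auto. Qed.

Lemma hsteps_plug C s t c : active_ctx C -> hsteps ar Rs nu s t c ->
  hsteps ar Rs nu (plug C s) (plug C t) c.
Proof.
  induction C as [|[[h ls] rs] C IH]; intros HC Hp; simpl; auto.
  inversion HC; subst. apply hsteps_ctx; auto.
Qed.

Lemma xplus_plug C s t c : active_ctx C -> xplus s t c -> xplus (plug C s) (plug C t) c.
Proof.
  induction C as [|[[h ls] rs] C IH]; intros HC Hp; simpl; auto.
  inversion HC; subst. apply xplus_ctx; auto.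
Qed.

Lemma hstep_instance l r c th X Y : xi_rule ar Rs l r c -> subst th l = X -> subst th r = Y ->
  hstep ar Rs nu X Y c.
Proof. intros H <- <-. constructor; auto. Qed.

Lemma NoDup_bands (P Q f1 f2 Z : list nat) B B' : B <= B' ->
  NoDup (P ++ Q) -> (forall x, In x (P ++ Q) -> x < B) ->
  NoDup (f1 ++ f2) -> (forall x, In x (f1 ++ f2) -> B <= x < B') ->
  NoDup Z -> (forall x, In x Z -> B' <= x) ->
  NoDup (P ++ f1 ++ (Q ++ Z) ++ f2).
Proof.
  intros HB HPQ HbPQ Hf Hbf HZ HbZ. rewrite app_assoc. apply NoDup_insert.
  - rewrite <- app_assoc. apply NoDup_app; [eapply NoDup_app_remove_r; eauto|auto|].
    intros x Hx Hx'. specialize (HbPQ x ltac:(apply in_or_app; auto)). specialize (Hbf x Hx'). lia.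
  - apply NoDup_app; [eapply NoDup_app_remove_l; eauto|auto|].
    intros x Hx Hx'. specialize (HbPQ x ltac:(apply in_or_app; auto)). specialize (HbZ x Hx'). lia.
  - intros x Hx Hx'. apply in_app_or in Hx.
    apply in_app_or in Hx' as [Hx'|Hx']; [apply in_app_or in Hx' as [Hx'|Hx']|].
    + destruct Hx as [Hx|Hx]; [eapply (NoDup_app_disj _ _ x HPQ); eauto|].
      specialize (HbZ x Hx). specialize (HbPQ x ltac:(apply in_or_app; auto)). lia.
    + specialize (Hbf x ltac:(apply in_or_app; auto)).
      destruct Hx as [Hx|Hx]; [specialize (HbPQ x ltac:(apply in_or_app; auto))|specialize (HbZ x Hx)];
        lia.
    + specialize (Hbf x ltac:(apply in_or_app; auto)).
      destruct Hx as [Hx|Hx]; [specialize (HbPQ x ltac:(apply in_or_app; auto))|specialize (HbZ x Hx)];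
        lia.
Qed.

Definition rule_vars (rho : crule F) : list nat :=
  vars (lhs rho) ++ vars (rhs rho) ++ flat_map (fun c => vars (fst c) ++ vars (snd c)) (conds rho).

Definition fresh_bound (rho : crule F) : nat := S (list_max (rule_vars rho)).

Lemma lt_fresh_bound rho x : In x (rule_vars rho) -> x < fresh_bound rho.
Proof.
  intros H. unfold fresh_bound.
  assert (Hm : Forall (fun y => y <= list_max (rule_vars rho)) (rule_vars rho))
    by (apply list_max_le; lia).
  rewrite Forall_forall in Hm. specialize (Hm x H). lia.
Qed.

Lemma rule_vars_lhs rho x : In x (flat_map vars (lhs_args rho)) -> In x (rule_vars rho).
Proof. intros H. apply in_or_app. auto. Qed.

Lemma rule_vars_rhs rho x : In x (vars (rhs rho)) -> In x (rule_vars rho).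
Proof. intros H. apply in_or_app. right. apply in_or_app; auto. Qed.

Lemma rule_vars_cond rho a b x : In (a, b) (conds rho) -> In x (vars a) \/ In x (vars b) ->
  In x (rule_vars rho).
Proof.
  intros Hc H. apply in_or_app. right. apply in_or_app. right.
  apply in_flat_map. exists (a, b). split; auto. simpl. apply in_or_app. tauto.
Qed.

Lemma lt_fresh_bound_rule rho j x :
  In x (flat_map vars (lhs_args rho) ++ flat_map vars (firstn j (map snd (conds rho)))) ->
  x < fresh_bound rho.
Proof.
  intros H. apply lt_fresh_bound. apply in_app_or in H as [H|H]; [apply rule_vars_lhs; auto|].
  apply in_flat_map in H as [b [Hb Hx]]. apply firstn_In in Hb.
  apply in_map_iff in Hb as [[a b'] [<- Hc]]. eapply rule_vars_cond; eauto.
Qed.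

Lemma NoDup_rule_vars f rho j : In rho (Rs f) ->
  NoDup (flat_map vars (lhs_args rho) ++ flat_map vars (firstn j (map snd (conds rho)))).
Proof.
  intros Hin. destruct (strong_rule f rho Hin) as (_ & _ & _ & _ & _ & _ & Hpw & _ & _ & Hl & Hlb).
  assert (H : NoDup (flat_map vars (lhs rho :: map snd (conds rho)))).
  { apply NoDup_flat_map_vars; auto. intros t [<-|Ht]; auto. rewrite Forall_forall in Hlb. apply Hlb; auto. }
  simpl in H. rewrite <- (firstn_skipn j (map snd (conds rho))) in H.
  rewrite flat_map_app, app_assoc in H. eapply NoDup_app_remove_r; eauto.
Qed.

Lemma flat_map_vars_BS rho j :
  flat_map vars (firstn j (BS Rs rho)) = flat_map vars (firstn j (map snd (conds rho))).
Proof.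
  unfold BS. rewrite <- map_map, firstn_map. apply flat_map_vars_xiT.
Qed.

(* The variables of rule rho are below [fresh_bound rho]; the pattern variables x_1, ...,
   x_{m_f} of the Xi(R) rules are the next m_f numbers, and patterns from AP lie above. *)
Definition flag_vars (f : F) (rho : crule F) : list nat := seq (fresh_bound rho) (mf Rs f).

Definition rule_pattern (f : F) (i : nat) (rho : crule F) (h : hsym F)
  (Y : list (term (hsym F))) : term (hsym F) :=
  Fun h (LA Rs rho ++ repl (map Var (flag_vars f rho)) (S i) Y).

Definition rule_subst (f : F) (L : list nat) (rho : crule F) (sg : nat -> term (lsym F))
  (thv : nat -> term (hsym F)) : nat -> term (hsym F) :=
  block_subst (fresh_bound rho) (rule_flags f L)
    (fun x => if x <? fresh_bound rho then encode (sg x) else thv x).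

Definition enc_args (rho : crule F) (sg : nat -> term (lsym F)) : list (term (hsym F)) :=
  map (fun l => encode (lsub Rs sg l)) (lhs_args rho).

Definition enc_conds (rho : crule F) (sg : nat -> term (lsym F)) (j : nat) : list (term (hsym F)) :=
  map (fun c => encode (lsub Rs sg (snd c))) (firstn j (conds rho)).

Lemma length_enc_args rho sg : length (enc_args rho sg) = length (lhs_args rho).
Proof. unfold enc_args; rewrite length_map; auto. Qed.

Lemma length_enc_conds rho sg j : j <= length (conds rho) -> length (enc_conds rho sg j) = j.
Proof. intros Hj. unfold enc_conds. rewrite length_map, length_firstn. lia. Qed.

Lemma encode_redex f L rho sg :
  encode (Fun (LD f L) (map (lsub Rs sg) (lhs_args rho))) = Fun (HF f) (enc_args rho sg ++ rule_flags f L).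
Proof. rewrite encode_LD. unfold enc_args. rewrite map_map. auto. Qed.

Section RuleSubst.
Variables (f : F) (L : list nat) (rho : crule F) (sg : nat -> term (lsym F))
  (thv : nat -> term (hsym F)).

Lemma rule_subst_xiT t : incl (vars t) (rule_vars rho) ->
  subst (rule_subst f L rho sg thv) (xiT Rs t) = encode (lsub Rs sg t).
Proof.
  intros H. rewrite encode_lsub. unfold rule_subst. rewrite subst_block_subst_outside.
  - apply subst_ext. intros x Hx. rewrite vars_xiT in Hx. apply H, lt_fresh_bound in Hx.
    destruct (Nat.ltb_spec x (fresh_bound rho)); auto; lia.
  - intros x Hx. rewrite vars_xiT in Hx. left. apply lt_fresh_bound, H, Hx.
Qed.

Lemma rule_subst_fresh v : (forall x, In x (vars v) -> fresh_bound rho + mf Rs f <= x) ->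
  subst (rule_subst f L rho sg thv) v = subst thv v.
Proof.
  intros H. unfold rule_subst. rewrite subst_block_subst_outside.
  - apply subst_ext. intros x Hx. specialize (H x Hx).
    destruct (Nat.ltb_spec x (fresh_bound rho)); auto; lia.
  - intros x Hx. right. rewrite length_rule_flags. auto.
Qed.

Lemma rule_subst_BS j :
  map (subst (rule_subst f L rho sg thv)) (firstn j (BS Rs rho)) = enc_conds rho sg j.
Proof.
  unfold BS, enc_conds. rewrite firstn_map, map_map. apply map_ext_in. intros [a b] Hc. simpl.
  apply rule_subst_xiT. intros x Hx. apply firstn_In in Hc. eapply rule_vars_cond; eauto.
Qed.

Lemma rule_subst_pattern i h Y :
  subst (rule_subst f L rho sg thv) (rule_pattern f i rho h Y) =
  Fun h (enc_args rho sg ++ repl (rule_flags f L) (S i) (map (subst (rule_subst f L rho sg thv)) Y)).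
Proof.
  simpl. rewrite map_app, map_repl. f_equal. f_equal.
  - unfold LA, enc_args. rewrite map_map. apply map_ext_in. intros l Hl. apply rule_subst_xiT.
    intros x Hx. apply rule_vars_lhs. apply in_flat_map; eauto.
  - f_equal. unfold flag_vars, rule_subst. rewrite <- (length_rule_flags f L).
    apply block_subst_block.
Qed.

End RuleSubst.

Definition aux_term (f : F) (i : nat) (rho : crule F) (L : list nat) (sg : nat -> term (lsym F))
  (j : nat) (X : term (hsym F)) : term (hsym F) :=
  Fun (HAux f (S i) (S j)) (enc_args rho sg ++ repl (rule_flags f L) (S i) (enc_conds rho sg j ++ [X])).

Lemma enc_conds_S rho sg j a b : nth_error (conds rho) j = Some (a, b) ->
  enc_conds rho sg (S j) = enc_conds rho sg j ++ [encode (lsub Rs sg b)].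
Proof. intros H. unfold enc_conds. rewrite (firstn_S_nth _ _ _ H), map_app. auto. Qed.

Section RuleInstances.
Variables (f : F) (i : nat) (rho : crule F).
Hypothesis Hrho : nth_error (Rs f) i = Some rho.

Lemma rule_in_Rs : In rho (Rs f).
Proof. eapply nth_error_In; eauto. Qed.

Lemma rule_index_lt : i < mf Rs f.
Proof. unfold mf. apply nth_error_Some. congruence. Qed.

Lemma linear_rule_pattern h n Z : NoDup (flat_map vars Z) ->
  (forall x, In x (flat_map vars Z) -> fresh_bound rho + mf Rs f <= x) ->
  linear (rule_pattern f i rho h (firstn n (BS Rs rho) ++ Z)).
Proof.
  intros HZ HbZ. unfold linear, rule_pattern.
  rewrite vars_Fun, flat_map_app, flat_map_repl, flat_map_app.
  replace (S i - 1) with i by lia. rewrite firstn_map, skipn_map, !flat_map_vars_Var.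
  unfold LA. rewrite flat_map_vars_xiT, flat_map_vars_BS.
  apply (NoDup_bands _ _ _ _ _ (fresh_bound rho) (fresh_bound rho + mf Rs f)); auto; try lia.
  - apply (NoDup_rule_vars f), rule_in_Rs.
  - apply lt_fresh_bound_rule.
  - apply NoDup_firstn_skipn, seq_NoDup.
  - intros x Hx. unfold flag_vars in Hx.
    apply in_app_or in Hx as [Hx|Hx]; [apply firstn_In in Hx|apply skipn_In in Hx];
      apply in_seq in Hx; lia.
Qed.

Lemma linear_rule_pattern_BS h n : linear (rule_pattern f i rho h (firstn n (BS Rs rho))).
Proof.
  rewrite <- (app_nil_r (firstn n _)). apply linear_rule_pattern; [constructor|contradiction].
Qed.

Lemma linear_rule_pattern_ground h t : vars t = [] -> linear (rule_pattern f i rho h [t]).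
Proof.
  intros Ht. apply (linear_rule_pattern h 0 [t]); simpl; rewrite Ht; [constructor|contradiction].
Qed.

Lemma length_flag_vars : length (flag_vars f rho) = mf Rs f.
Proof. apply length_seq. Qed.

Lemma xi_rule_uncond : conds rho = [] ->
  xi_rule ar Rs (rule_pattern f i rho (HF f) [htop]) (xiT Rs (rhs rho)) 1.
Proof.
  intros H. apply xr1; simpl; rewrite ?Nat.sub_0_r; auto using length_flag_vars; [lia|].
  apply linear_rule_pattern_ground. reflexivity.
Qed.

Lemma xi_rule_first a b : nth_error (conds rho) 0 = Some (a, b) ->
  xi_rule ar Rs (rule_pattern f i rho (HF f) [htop])
    (rule_pattern f i rho (HAux f (S i) 1) [xiT Rs a]) 0.
Proof.
  intros H. apply xr2 with (b := b); simpl; rewrite ?Nat.sub_0_r; auto using length_flag_vars; [lia|].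
  apply linear_rule_pattern_ground. reflexivity.
Qed.

Lemma xi_rule_next j a b : 1 <= j -> j < length (conds rho) -> nth_error (conds rho) j = Some (a, b) ->
  xi_rule ar Rs (rule_pattern f i rho (HAux f (S i) j) (firstn j (BS Rs rho)))
    (rule_pattern f i rho (HAux f (S i) (S j)) (firstn j (BS Rs rho) ++ [xiT Rs a])) 0.
Proof.
  intros H1 H2 H. apply xr4 with (b := b); simpl; rewrite ?Nat.sub_0_r; auto using length_flag_vars;
    [lia|apply linear_rule_pattern_BS].
Qed.

Lemma xi_rule_last : 0 < length (conds rho) ->
  xi_rule ar Rs (rule_pattern f i rho (HAux f (S i) (length (conds rho))) (BS Rs rho))
    (xiT Rs (rhs rho)) 1.
Proof.
  intros H. apply xr3; simpl; rewrite ?Nat.sub_0_r; auto using length_flag_vars; [lia|].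
  rewrite <- (firstn_all (BS Rs rho)). apply linear_rule_pattern_BS.
Qed.

Lemma xi_rule_fail j a b v : j < length (conds rho) -> nth_error (conds rho) j = Some (a, b) ->
  ap ar Rs b v -> NoDup (vars v) -> (forall x, In x (vars v) -> fresh_bound rho + mf Rs f <= x) ->
  xi_rule ar Rs (rule_pattern f i rho (HAux f (S i) (S j)) (firstn j (BS Rs rho) ++ [v]))
    (rule_pattern f i rho (HF f) [hbot]) 0.
Proof.
  intros Hj H Hap Hnd Hb. unfold rule_pattern.
  replace (firstn j (BS Rs rho)) with (firstn (S j - 1) (BS Rs rho)) by (f_equal; lia).
  eapply xr5 with (j := S j); simpl; rewrite ?Nat.sub_0_r; eauto using length_flag_vars; try lia.
  apply linear_rule_pattern; rewrite flat_map_one; auto.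
Qed.

Section Chain.
Variables (L : list nat) (sg : nat -> term (lsym F)) (cs : list nat).
Hypothesis HiL : In i L.
Hypothesis Hconds : conds_simulated rho sg cs.

Let TH := rule_subst f L rho sg Var.

Lemma rule_subst_redex : subst TH (rule_pattern f i rho (HF f) [htop]) =
  encode (Fun (LD f L) (map (lsub Rs sg) (lhs_args rho))).
Proof.
  unfold TH. rewrite rule_subst_pattern, encode_redex. cbn [map subst].
  rewrite rule_flags_top; auto using rule_index_lt.
Qed.

Lemma rule_subst_aux j a b : nth_error (conds rho) j = Some (a, b) ->
  subst TH (rule_pattern f i rho (HAux f (S i) (S j)) (firstn (S j) (BS Rs rho))) =
  aux_term f i rho L sg j (encode (lsub Rs sg b)).
Proof.
  intros Hab. unfold TH. rewrite rule_subst_pattern, rule_subst_BS, (enc_conds_S _ _ _ _ _ Hab).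
  auto.
Qed.

Lemma rule_subst_aux_next j a b : nth_error (conds rho) j = Some (a, b) ->
  subst TH (rule_pattern f i rho (HAux f (S i) (S j)) (firstn j (BS Rs rho) ++ [xiT Rs a])) =
  aux_term f i rho L sg j (encode (lsub Rs sg a)).
Proof.
  intros Hab. unfold TH. rewrite rule_subst_pattern, map_app, rule_subst_BS. cbn [map].
  rewrite rule_subst_xiT; auto.
  intros x Hx. eapply rule_vars_cond; eauto using nth_error_In.
Qed.

Definition aux_frame (j : nat) : frame :=
  (HAux f (S i) (S j), enc_args rho sg ++ firstn i (rule_flags f L) ++ enc_conds rho sg j,
   skipn (S i) (rule_flags f L)).

Lemma plug_aux_frame j X : plug [aux_frame j] X = aux_term f i rho L sg j X.
Proof.
  unfold aux_term, aux_frame, repl. cbn [plug]. replace (S i - 1) with i by lia.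
  rewrite <- !app_assoc. reflexivity.
Qed.

Lemma aux_frame_active j : j <= length (conds rho) -> active_ctx [aux_frame j].
Proof.
  intros Hj. constructor; [|constructor]. simpl.
  rewrite !length_app, length_enc_args, length_firstn, length_rule_flags, length_enc_conds by auto.
  rewrite (length_lhs_args f rho rule_in_Rs). pose proof rule_index_lt. lia.
Qed.

Lemma aux_term_hsteps j X Y c : j <= length (conds rho) -> hsteps ar Rs nu X Y c ->
  hsteps ar Rs nu (aux_term f i rho L sg j X) (aux_term f i rho L sg j Y) c.
Proof.
  intros Hj H. rewrite <- !plug_aux_frame. apply hsteps_plug; auto using aux_frame_active.
Qed.

Lemma encode_chain j : j < length (conds rho) -> j <= length cs ->
  forall a b, nth_error (conds rho) j = Some (a, b) ->
  xplus (encode (Fun (LD f L) (map (lsub Rs sg) (lhs_args rho))))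
        (aux_term f i rho L sg j (encode (lsub Rs sg a))) (list_sum (firstn j cs)).
Proof.
  induction j as [|j IH]; intros Hj Hjc a b Hab.
  - apply xplus_of_hstep. eapply hstep_instance; [eapply xi_rule_first; eauto| |].
    + apply rule_subst_redex.
    + apply (rule_subst_aux_next 0 a b Hab).
  - destruct (nth_error (conds rho) j) as [[a0 b0]|] eqn:E0; [|apply nth_error_None in E0; lia].
    destruct (nth_error cs j) as [c0|] eqn:Ec; [|apply nth_error_None in Ec; lia].
    rewrite (list_sum_firstn_S _ _ _ Ec), <- (Nat.add_0_r (_ + c0)).
    eapply xplus_hsteps; [eapply xplus_hsteps|].
    + apply (IH ltac:(lia) ltac:(lia) a0 b0 eq_refl).
    + apply aux_term_hsteps; [lia|]. apply (Hconds j a0 b0 c0); auto.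
    + apply hsteps_of_xplus, xplus_of_hstep.
      eapply hstep_instance; [apply (xi_rule_next (S j) a b); auto; lia| |].
      * apply (rule_subst_aux j a0 b0 E0).
      * apply (rule_subst_aux_next (S j) a b Hab).
Qed.

Lemma encode_succ_step : length cs = length (conds rho) ->
  xplus (encode (Fun (LD f L) (map (lsub Rs sg) (lhs_args rho))))
        (encode (lsub Rs sg (rhs rho))) (1 + list_sum cs).
Proof.
  intros Hlen.
  assert (Hrhs : subst TH (xiT Rs (rhs rho)) = encode (lsub Rs sg (rhs rho))).
  { apply rule_subst_xiT. intros x Hx. apply rule_vars_rhs; auto. }
  destruct (length (conds rho)) as [|j] eqn:Ek.
  - destruct cs; [|discriminate].
    apply xplus_of_hstep. eapply hstep_instance; [apply xi_rule_uncond| |]; eauto.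
    + destruct (conds rho); auto; discriminate.
    + apply rule_subst_redex.
  - destruct (nth_error (conds rho) j) as [[a b]|] eqn:E0; [|apply nth_error_None in E0; lia].
    destruct (nth_error cs j) as [c0|] eqn:Ec; [|apply nth_error_None in Ec; lia].
    replace (1 + list_sum cs) with (list_sum (firstn j cs) + c0 + (1 + 0))
      by (rewrite <- (list_sum_firstn_S _ _ _ Ec), firstn_all2; lia).
    eapply xplus_hsteps; [eapply xplus_hsteps|].
    + apply (encode_chain j ltac:(lia) ltac:(lia) a b E0).
    + apply aux_term_hsteps; [lia|]. apply (Hconds j a b c0); auto.
    + econstructor; [|constructor].
      eapply hstep_instance; [apply xi_rule_last; lia| |exact Hrhs].
      rewrite Ek, <- (rule_subst_aux j a b E0), <- Ek, firstn_all2; auto.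
      unfold BS. rewrite length_map. lia.
Qed.

Lemma encode_fail_step a b v thv c :
  length cs < length (conds rho) -> nth_error (conds rho) (length cs) = Some (a, b) ->
  ap ar Rs b v -> NoDup (vars v) -> (forall x, In x (vars v) -> fresh_bound rho + mf Rs f <= x) ->
  hsteps ar Rs nu (encode (lsub Rs sg a)) (subst thv v) c ->
  xplus (encode (Fun (LD f L) (map (lsub Rs sg) (lhs_args rho))))
        (encode (Fun (LD f (remove_idx i L)) (map (lsub Rs sg) (lhs_args rho)))) (list_sum cs + c).
Proof.
  intros Hlt Hab Hap Hnv Hvb Hst.
  set (j := length cs) in *.
  replace (list_sum cs + c) with (list_sum (firstn j cs) + c + 0) by (unfold j; rewrite firstn_all; lia).
  eapply xplus_hsteps; [eapply xplus_hsteps|].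
  - apply (encode_chain j ltac:(lia) ltac:(lia) a b Hab).
  - apply aux_term_hsteps; [lia|]. exact Hst.
  - apply hsteps_of_xplus, xplus_of_hstep.
    eapply hstep_instance with (th := rule_subst f L rho sg thv); [eapply xi_rule_fail; eauto| |].
    + rewrite rule_subst_pattern, map_app, rule_subst_BS. cbn [map].
      rewrite rule_subst_fresh; auto.
    + rewrite rule_subst_pattern, encode_redex. cbn [map subst].
      rewrite rule_flags_remove; auto using rule_index_lt.
Qed.

End Chain.
End RuleInstances.

Lemma NoDup_insert_above (l1 v l2 : list nat) B : NoDup (l1 ++ l2) -> NoDup v ->
  (forall x, In x (l1 ++ l2) -> x < B) -> (forall x, In x v -> B <= x) -> NoDup (l1 ++ v ++ l2).
Proof.
  intros H12 Hv Hb12 Hbv. apply NoDup_insert; auto.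
  intros x Hx Hx'. specialize (Hb12 x Hx'). specialize (Hbv x Hx). lia.
Qed.

Lemma linear_mismatch_pattern f i k v : i < mf Rs f -> k < ar f -> NoDup (vars v) ->
  (forall x, In x (vars v) -> ar f + mf Rs f <= x) ->
  linear (Fun (HF f) (repl (map Var (seq 0 (ar f))) (S k) [v] ++
                      repl (map Var (seq (ar f) (mf Rs f))) (S i) [htop])).
Proof.
  intros Hi Hk Hnd Hb. unfold linear.
  rewrite vars_Fun, flat_map_app, !flat_map_repl, !flat_map_one, !firstn_map, !skipn_map,
    !flat_map_vars_Var. replace (S k - 1) with k by lia. replace (S i - 1) with i by lia.
  cbn [vars]. rewrite <- !app_assoc, app_nil_l.
  apply (NoDup_insert_above _ _ _ (ar f + mf Rs f)); auto.
  - rewrite app_assoc. apply NoDup_app; try apply NoDup_firstn_skipn, seq_NoDup.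
    intros x Hx Hx'.
    apply in_app_or in Hx as [Hx|Hx]; [apply firstn_In in Hx|apply skipn_In in Hx];
    apply in_app_or in Hx' as [Hx'|Hx']; (apply firstn_In in Hx' || apply skipn_In in Hx');
    apply in_seq in Hx; apply in_seq in Hx'; lia.
  - intros x Hx. repeat (apply in_app_or in Hx as [Hx|Hx]);
      (apply firstn_In in Hx || apply skipn_In in Hx); apply in_seq in Hx; lia.
Qed.

Lemma xi_rule_mismatch f i rho k l v :
  nth_error (Rs f) i = Some rho -> nth_error (lhs_args rho) k = Some l ->
  ap ar Rs l v -> NoDup (vars v) -> (forall x, In x (vars v) -> ar f + mf Rs f <= x) ->
  xi_rule ar Rs
    (Fun (HF f) (repl (map Var (seq 0 (ar f))) (S k) [v] ++
                 repl (map Var (seq (ar f) (mf Rs f))) (S i) [htop]))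
    (Fun (HF f) (repl (map Var (seq 0 (ar f))) (S k) [v] ++
                 repl (map Var (seq (ar f) (mf Rs f))) (S i) [hbot])) 0.
Proof.
  intros Hrho Hl Hap Hnd Hb. apply xr6 with (rho := rho) (lj := l); simpl;
    rewrite ?Nat.sub_0_r, ?length_seq; auto; try lia.
  apply linear_mismatch_pattern; auto.
  - apply (rule_index_lt f i rho Hrho).
  - rewrite <- (length_lhs_args f rho (rule_in_Rs f i rho Hrho)). apply nth_error_Some. congruence.
Qed.

Lemma subst_two_blocks (ws fl : list (term (hsym F))) thv n m h k i v Z :
  length ws = n -> length fl = m -> (forall x, In x (vars v) -> n + m <= x) -> vars Z = [] ->
  subst (block_subst 0 ws (block_subst n fl thv))
    (Fun h (repl (map Var (seq 0 n)) (S k) [v] ++ repl (map Var (seq n m)) (S i) [Z])) =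
  Fun h (repl ws (S k) [subst thv v] ++ repl fl (S i) [Z]).
Proof.
  intros <- <- Hv HZ. simpl. rewrite map_app, !map_repl. cbn [map]. do 2 f_equal.
  - rewrite block_subst_block, !subst_block_subst_outside; auto;
      intros x Hx; apply Hv in Hx; lia.
  - rewrite (map_ext_in _ (subst (block_subst (length ws) fl thv))).
    + rewrite block_subst_block, subst_id; auto. rewrite HZ. contradiction.
    + intros t Ht. apply in_map_iff in Ht as [z [<- Hz]]. apply in_seq in Hz.
      apply subst_block_subst_outside. intros y [<-|[]]. right. lia.
Qed.

Lemma encode_bot_step f L i rho us sg :
  nth_error (Rs f) i = Some rho -> In i L -> Forall (lnf Rs) us -> NoDup (flat_map vars us) ->
  disjoint (flat_map vars us) (vars (lhs rho)) -> ~ unifiable (Fun f (map erase us)) (lhs rho) ->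
  guarded (Fun (LD f L) (map (subst sg) us)) ->
  hstep ar Rs nu (encode (Fun (LD f L) (map (subst sg) us)))
                 (encode (Fun (LD f (remove_idx i L)) (map (subst sg) us))) 0.
Proof.
  intros Hrho HiL Hlnf Hnd Hdis Hun HG.
  pose proof (rule_in_Rs f i rho Hrho) as Hin. pose proof (rule_index_lt f i rho Hrho) as Himf.
  destruct (strong_rule f rho Hin) as (Hf & Hwl & _ & _ & Hcl & _ & _ & _ & _ & Hlin & _).
  assert (Hlhs : lhs rho = Fun f (lhs_args rho)) by (unfold lhs; rewrite Hf; auto).
  rewrite Hlhs in Hun, Hdis, Hwl, Hlin. apply wf_Fun in Hwl as [Hll Hwl].
  assert (Hlen : length us = ar f).
  { inversion HG as [|s0 ts0 HlenG]. rewrite length_map in HlenG. auto. }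
  assert (HwU : Forall lwf us).
  { rewrite Forall_forall. intros u Hu. apply (lwf_of_guarded_subst sg).
    eapply guarded_in; eauto. apply in_map; auto. }
  destruct (clash_of_not_unifiable_args f us (lhs_args rho)) as [k [u [l [Hu [Hl Hc]]]]];
    auto; [rewrite Forall_forall; auto|congruence|].
  rewrite Forall_forall in Hlnf, HwU, Hcl.
  assert (Hinu : In u us) by (eapply nth_error_In; eauto).
  assert (Hinl : In l (lhs_args rho)) by (eapply nth_error_In; eauto).
  destruct (ap_match_of_clash u l sg Hc (Hlnf u Hinu) (HwU u Hinu) (Hwl l Hinl) (Hcl l Hinl)
              (ar f + mf Rs f)) as [v [thv [Hap [Hnv [Hvb Hvth]]]]].
  set (ws := map (fun u => encode (subst sg u)) us).
  assert (Hargs : repl ws (S k) [encode (subst sg u)] = ws).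
  { apply repl_nth_error. unfold ws. rewrite nth_error_map, Hu. auto. }
  eapply hstep_instance with (th := block_subst 0 ws (block_subst (ar f) (rule_flags f L) thv));
    [eapply xi_rule_mismatch; eauto| |];
    (rewrite subst_two_blocks; [|unfold ws; rewrite length_map; auto|apply length_rule_flags|auto|auto]);
    rewrite Hvth, Hargs, encode_LD; unfold ws; rewrite map_map.
  - rewrite rule_flags_top; auto.
  - rewrite rule_flags_remove; auto.
Qed.

Lemma simulate_ctx g ls s t rs c : lstep Rs s t c -> guarded (Fun g (ls ++ s :: rs)) ->
  (guarded s -> guarded t /\ xplus (encode s) (encode t) c) ->
  guarded (Fun g (ls ++ t :: rs)) /\
  xplus (encode (Fun g (ls ++ s :: rs))) (encode (Fun g (ls ++ t :: rs))) c.
Proof.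
  intros Hst HG IH. destruct (guarded_middle _ _ _ _ HG) as [Hs _].
  assert (Hu : ups (lsym_head g) (S (length ls))).
  { eapply active_of_guarded_middle; eauto. eapply lstep_not_lcterm; eauto. }
  destruct (IH Hs) as [Ht Hp]. split; [apply (guarded_replace g ls s t rs); auto|].
  rewrite !encode_middle. apply xplus_ctx; auto. simpl. rewrite length_map. auto.
Qed.

Lemma simulate_succ f L i rho sg cs : In i L -> nth_error (Rs f) i = Some rho ->
  length cs = length (conds rho) -> conds_simulated_if_guarded rho sg cs ->
  guarded (Fun (LD f L) (map (lsub Rs sg) (lhs_args rho))) ->
  guarded (lsub Rs sg (rhs rho)) /\
  xplus (encode (Fun (LD f L) (map (lsub Rs sg) (lhs_args rho))))
        (encode (lsub Rs sg (rhs rho))) (1 + list_sum cs).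
Proof.
  intros HiL Hrho Hlen IH HG.
  destruct (guarded_conditions f L i rho sg cs Hrho HG IH) as [Ha Hsim]. split.
  - apply (Ha (length cs)); auto. rewrite Hlen. apply nth_error_as_last.
  - exact (encode_succ_step f i rho Hrho L sg cs HiL Hsim Hlen).
Qed.

Lemma simulate_fail f L i rho sg cs a b u tau c : In i L -> nth_error (Rs f) i = Some rho ->
  length cs < length (conds rho) -> conds_simulated_if_guarded rho sg cs ->
  nth_error (conds rho) (length cs) = Some (a, b) ->
  (guarded (lsub Rs sg a) ->
   guarded (subst tau u) /\ hsteps ar Rs nu (encode (lsub Rs sg a)) (encode (subst tau u)) c) ->
  lnf Rs u -> linear u -> disjoint (vars u) (vars b) -> ~ unifiable (erase u) b ->
  guarded (Fun (LD f L) (map (lsub Rs sg) (lhs_args rho))) ->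
  guarded (Fun (LD f (remove_idx i L)) (map (lsub Rs sg) (lhs_args rho))) /\
  xplus (encode (Fun (LD f L) (map (lsub Rs sg) (lhs_args rho))))
        (encode (Fun (LD f (remove_idx i L)) (map (lsub Rs sg) (lhs_args rho)))) (list_sum cs + c).
Proof.
  intros HiL Hrho Hlt IH Hab IHa Hlnf Hlin Hdis Hun HG.
  pose proof (rule_in_Rs f i rho Hrho) as Hin.
  destruct (guarded_conditions f L i rho sg cs Hrho HG IH) as [Ha Hsim].
  destruct IHa as [HGu Hstu]; [apply (Ha (length cs)); auto; eapply nth_error_as_cond; eauto|].
  destruct (strong_rule f rho Hin) as (_ & _ & _ & Hwc & _ & Hcb & _ & _ & _ & _ & Hlb).
  assert (Hinb : In b (map snd (conds rho))).
  { apply in_map_iff. exists (a, b). split; auto. eapply nth_error_In; eauto. }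
  rewrite Forall_forall in Hwc, Hcb, Hlb.
  assert (Hwb : wf ar b) by (apply (Hwc (a, b)); eapply nth_error_In; eauto).
  pose proof (lwf_of_guarded_subst _ _ HGu) as Hwu.
  assert (Hc : clash u b) by (apply clash_of_not_unifiable; auto; apply Hlb; auto).
  destruct (ap_match_of_clash u b tau Hc Hlnf Hwu Hwb (Hcb b Hinb) (fresh_bound rho + mf Rs f))
    as [v [thv [Hap [Hnv [Hvb Hvth]]]]].
  split; [eapply guarded_relabel; eauto|].
  apply (encode_fail_step f i rho Hrho L sg cs HiL Hsim a b v thv); auto. rewrite Hvth. auto.
Qed.

Scheme lstep_mut := Induction for lstep Sort Prop
with lsteps_mut := Induction for lsteps Sort Prop.
Combined Scheme lstep_lsteps_ind from lstep_mut, lsteps_mut.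

Lemma encode_lstep_lsteps :
  (forall s t c, lstep Rs s t c -> guarded s -> guarded t /\ xplus (encode s) (encode t) c) /\
  (forall s t c, lsteps Rs s t c -> guarded s ->
     guarded t /\ hsteps ar Rs nu (encode s) (encode t) c).
Proof.
  cut ((forall s t c (_ : lstep Rs s t c), guarded s -> guarded t /\ xplus (encode s) (encode t) c) /\
       (forall s t c (_ : lsteps Rs s t c), guarded s ->
          guarded t /\ hsteps ar Rs nu (encode s) (encode t) c)); [tauto|].
  apply lstep_lsteps_ind.
  - intros. eapply simulate_ctx; eauto.
  - intros f L i rho us sg HiL Hrho Hlnf Hnd Hdis Hun HG. split; [eapply guarded_relabel; eauto|].
    apply xplus_of_hstep. eapply encode_bot_step; eauto.
  - intros f L i rho sg cs HiL Hrho Hlen _ IH HG. eapply simulate_succ; eauto.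
  - intros f L i rho sg cs a b u tau c HiL Hrho Hlt _ IH Hab _ IHa Hlnf Hlin Hdis Hun HG.
    eapply simulate_fail; eauto.
  - intros s Hs. split; auto. constructor.
  - intros s t u c1 c2 Hst IH1 Hsts IH2 Hs.
    destruct (IH1 Hs) as [Ht Hp]. destruct (IH2 Ht) as [Hu Hq]. split; auto.
    eapply hsteps_trans; eauto. apply hsteps_of_xplus; auto.
Qed.

Lemma encode_lcond_root s t : lcond_root Rs s t -> guarded s ->
  guarded t /\ exists C c, active_ctx C /\ xplus (encode s) (plug C (encode t)) c.
Proof.
  intros [f L i rho sg cs a b HiL Hrho Hlt Hst Hab] HG.
  assert (IH : conds_simulated_if_guarded rho sg cs).
  { intros m a' b' c' H1 H2 H3. apply (proj2 encode_lstep_lsteps); auto. eapply Hst; eauto. }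
  destruct (guarded_conditions f L i rho sg cs Hrho HG IH) as [Ha Hsim].
  split; [apply (Ha (length cs)); auto; eapply nth_error_as_cond; eauto|].
  exists [aux_frame f i rho L sg (length cs)], (list_sum (firstn (length cs) cs)). split.
  - apply aux_frame_active; auto. lia.
  - rewrite plug_aux_frame. eapply encode_chain; eauto.
Qed.

Lemma encode_lcond s t : lcond Rs s t -> guarded s ->
  guarded t /\ exists C c, active_ctx C /\ xplus (encode s) (plug C (encode t)) c.
Proof.
  induction 1 as [s t Hr | g ts s t Hin Hl IH]; [apply encode_lcond_root; auto|].
  intros HG. apply In_nth_error in Hin as [k Hk].
  destruct (nth_error_split ts k Hk) as [ls [rs [-> _]]].
  destruct (guarded_middle _ _ _ _ HG) as [Hs _].
  assert (Hu : ups (lsym_head g) (S (length ls))).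
  { eapply active_of_guarded_middle; eauto. eapply lcond_not_lcterm; eauto. }
  destruct (IH Hs) as [Ht [C [c [HC Hp]]]]. split; auto.
  exists ((HF (lsym_head g), map encode ls, map encode rs ++ lsym_flags g) :: C), c.
  assert (Hact : nu (HF (lsym_head g)) (S (length (map encode ls)))) by (simpl; rewrite length_map; auto).
  split; [constructor; auto|].
  rewrite encode_middle. apply xplus_ctx; auto.
Qed.

(* The context collects the descents ⇀_▷ into conditions taken so far. *)
Definition encodes_linf (X : term (hsym F)) : Prop :=
  exists s C, guarded s /\ linf Rs s /\ active_ctx C /\ X = plug C (encode s).

Lemma encodes_linf_step X : encodes_linf X -> exists X' c, xplus X X' c /\ encodes_linf X'.
Proof.
  intros [s [C [HG [[sq [H0 Hsq]] [HC ->]]]]].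
  assert (Hl1 : linf Rs (sq 1)) by (exists (fun i => sq (S i)); split; auto).
  destruct (Hsq 0) as [[c Hst]|Hlc]; rewrite H0 in *.
  - destruct (proj1 encode_lstep_lsteps _ _ _ Hst HG) as [HG1 Hp].
    exists (plug C (encode (sq 1))), c. split; [apply xplus_plug; auto|].
    exists (sq 1), C. auto.
  - destruct (encode_lcond _ _ Hlc HG) as [HG1 [C' [c [HC' Hp]]]].
    exists (plug (C ++ C') (encode (sq 1))), c. split.
    + rewrite plug_app. apply xplus_plug; auto.
    + exists (sq 1), (C ++ C'). repeat split; auto. apply Forall_app; auto.
Qed.

Lemma hinf_of_progress (P : term (hsym F) -> Prop) :
  (forall X, P X -> exists X', (exists c, hstep ar Rs nu X X' c) /\ P X') ->
  forall X, P X -> hinf ar Rs nu X.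
Proof.
  intros Hstep X HX.
  set (next := fun Z => epsilon (inhabits Z) (fun Z' => (exists c, hstep ar Rs nu Z Z' c) /\ P Z')).
  assert (Hnext : forall Z, P Z -> (exists c, hstep ar Rs nu Z (next Z) c) /\ P (next Z)).
  { intros Z HZ. apply epsilon_spec, Hstep, HZ. }
  assert (HP : forall n, P (Nat.iter n next X)) by (induction n; simpl; auto; apply Hnext; auto).
  exists (fun n => Nat.iter n next X). split; auto.
  intros n. apply (Hnext _ (HP n)).
Qed.

Lemma hinf_encode s : guarded s -> linf Rs s -> hinf ar Rs nu (encode s).
Proof.
  intros HG Hl.
  apply (hinf_of_progress (fun X => exists Y c, hsteps ar Rs nu X Y c /\ encodes_linf Y)).
  - intros X [Y [c [Hs HY]]]. destruct Hs as [Y|X m Y c1 c2 H1 H2].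
    + destruct (encodes_linf_step Y HY) as [X' [c [[m [c1 [c2 [H1 [H2 _]]]]] HX']]].
      exists m. split; eauto.
    + exists m. split; eauto.
  - exists (encode s), 0. split; [constructor|]. exists s, []. repeat split; auto. constructor.
Qed.

Lemma dh_lab_le_dh_nu s : guarded s -> ele (dh_lab Rs s) (dh_nu ar Rs nu (encode s)).
Proof.
  intros HG. apply esup_mono.
  intros y [[t [c [Hst ->]]]|[-> Hl]].
  - exists (fin c). split; [|apply ele_refl]. left. exists (encode t), c. split; auto.
    apply (proj2 encode_lstep_lsteps _ _ _ Hst HG).
  - exists inf. split; [|apply ele_refl]. right. split; auto. apply hinf_encode; auto.
Qed.

Lemma guarded_label_basic t : ground_basic ar Rs t -> guarded (label Rs t).
Proof.
  intros [Hw [_ [f [ts [-> [Hd Hc]]]]]].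
  rewrite <- lsub_Var_label, lsub_Fun. apply wf_Fun in Hw as [Hl Hw]. constructor.
  - rewrite length_map, lsym_head_label_sym; auto.
  - intros c Hc'. unfold label_sym in Hc'. destruct (Rs f) eqn:E; [exfalso; apply Hd; auto|discriminate].
  - intros k u Hk. rewrite nth_error_map in Hk.
    destruct (nth_error ts k) as [u0|] eqn:E; inversion Hk; subst.
    assert (Hin : In u0 ts) by (eapply nth_error_In; eauto). rewrite Forall_forall in Hc.
    assert (HC : lcterm (lsub Rs Var u0)) by (apply lcterm_lsub; auto; intros; constructor).
    split; auto. apply guarded_of_lcterm; auto.
Qed.

End Simulation.

Lemma hsym_ok_xiT {F} (ar : F -> nat) (Rs : F -> list (crule F)) t :
  wf ar t -> allsyms (hsym_ok ar Rs) (xiT Rs t).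
Proof.
  unfold xiT. induction t as [x|g ts IH] using term_ind_nested; intros Hw; [simpl; auto|].
  apply wf_Fun in Hw as [Hl Hw]. simpl xi. apply allsyms_Fun. split.
  - simpl. rewrite length_app, length_map, repeat_length. lia.
  - intros u Hu. apply in_app_or in Hu as [Hu|Hu].
    + apply in_map_iff in Hu as [u' [<- Hu']]. rewrite Forall_forall in IH. auto.
    + apply repeat_spec in Hu. subst. simpl. auto.
Qed.

Lemma hsize_xiT {F} (Rs : F -> list (crule F)) t : hsize (xiT Rs t) = wsize (fun _ => 1) t.
Proof.
  unfold xiT, hsize. induction t as [x|g ts IH] using term_ind_nested; [reflexivity|].
  simpl. rewrite map_app, list_sum_app, map_repeat, map_map. simpl.
  replace (list_sum (repeat 0 (mf Rs g))) with 0 by (induction (mf Rs g); simpl; auto).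
  rewrite Nat.add_0_r. do 2 f_equal. apply map_ext_in.
  intros u Hu. rewrite Forall_forall in IH. auto.
Qed.

Lemma xiT_cterm {F} (Rs : F -> list (crule F)) t : cterm Rs t ->
  allsyms (fun h _ => match h with
                      | HF c => is_constructor Rs c
                      | HBot | HTop => True
                      | HAux _ _ _ => False
                      end) (xiT Rs t).
Proof.
  unfold xiT. induction t as [x|g ts IH] using term_ind_nested; intros Hc; [simpl; auto|].
  apply cterm_Fun in Hc as [Hc1 Hc2]. simpl xi. apply allsyms_Fun. split; auto.
  intros u Hu. apply in_app_or in Hu as [Hu|Hu].
  + apply in_map_iff in Hu as [u' [<- Hu']]. rewrite Forall_forall in IH. auto.
  + apply repeat_spec in Hu. subst. simpl. auto.
Qed.

Lemma hbasic_xiT {F} (ar : F -> nat) (Rs : F -> list (crule F)) t :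
  ground_basic ar Rs t -> hbasic ar Rs (xiT Rs t).
Proof.
  intros [Hw [Hv [f [ts [-> [Hd Hc]]]]]].
  split; [apply hsym_ok_xiT; auto|]. split; [rewrite vars_xiT; auto|].
  exists (HF f), (map (xiT Rs) ts ++ repeat htop (mf Rs f)). split; [reflexivity|].
  split; auto. apply Forall_app. split.
  - rewrite Forall_forall in *. intros u Hu. apply in_map_iff in Hu as [u' [<- Hu']].
    apply xiT_cterm; auto.
  - rewrite Forall_forall. intros u Hu. apply repeat_spec in Hu. subst. simpl. auto.
Qed.

Theorem theorem7 (F : Type) (ar : F -> nat) (Rs : F -> list (crule F))
  (ups : F -> nat -> Prop) :
  strong_cctrs ar Rs -> repmap ar ups -> usable Rs ups ->
  forall n : nat, ele (crc ar Rs n) (rc ar Rs (mu_ups ar ups) n).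
Proof.
  intros Hs _ Hus n. apply esup_mono.
  intros y [t [Hgb [Hsz ->]]].
  exists (dh_nu ar Rs (mu_ups ar ups) (xiT Rs t)). split.
  - exists (xiT Rs t). split; [apply hbasic_xiT; auto|]. rewrite hsize_xiT. auto.
  - rewrite <- (encode_label Rs t). apply (dh_lab_le_dh_nu ar Rs ups Hs Hus).
    apply guarded_label_basic; auto.
Qed.
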